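(* In the setting described in the context, let $\langle A\rangle^{(l)}_{A_n}=K/(\tau\Delta r)$ be the average over a bulk site $A_n$ of a $T^1$-type local quantity $A^{(l)}(f,m,\hat C)$ with $m=2m'+1$ odd ($m'\ge0$) and with $\epsilon=-1$ or $\delta=1$. Then, writing $\hat C,\hat C_\rho$ for $\hat C(\rho^{(l)}_n)$ and $\frac{d\hat C}{d\rho}(\rho^{(l)}_n)$, $$\langle A\rangle^{(l)}_{A_n}=\Delta r^{m-1}\Big\{T_1+T_2+T_3\Big\}+\text{(terms of higher order in }\Delta r),$$ where $$T_1=-(1+\epsilon(-1)^m)\frac{v\hat C}{2^m}\Big[(\delta+1)\sum_{p=0}^{m'}\binom{m}{2p}X_{1,0}^{2p}X_{0,1}^{2(m'-p)+1}S_\nu(2p)+(\delta-1)\sum_{p=0}^{m'}\binom{m}{2p+1}X_{1,0}^{2p+1}X_{0,1}^{2(m'-p)}S_\nu(2(m'-p))\Big],$$ $$T_2=(\delta+1)\frac{D}{2^m}\hat C_\rho\Big[\sum_{p=0}^{m'}\binom{m}{2p}X_{1,0}^{2p}X_{0,1}^{2(m'-p)+1}\big(Y^{(1)}_{0,1}-\epsilon Y^{(2)}_{0,1}\big)S_\nu(2p)+\sum_{p=0}^{m'}\binom{m}{2p+1}X_{1,0}^{2p+1}X_{0,1}^{2(m'-p)}\big(Y^{(1)}_{1,0}-\epsilon Y^{(2)}_{1,0}\big)S_\nu(2(m'-p))\Big],$$ $$T_3=(\delta+1)\frac{mD}{2^m}\hat C\Big\{\sum_{p=0}^{m'}\binom{2m'}{2p}X_{1,0}^{2p}X_{0,1}^{2(m'-p)}\Big[X^{(1)}_{2,0}S_\nu(2(m'-p))+X^{(1)}_{0,2}S_\nu(2p)-\epsilon\big(X^{(2)}_{2,0}S_\nu(2(m'-p))+X^{(2)}_{0,2}S_\nu(2p)\big)\Big]+\beta\sum_{p=0}^{m'-1}\binom{2m'}{2p+1}X_{1,0}^{2p+1}X_{0,1}^{2(m'-p)-1}\big(X^{(1)}_{1,1}-\epsilon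 X^{(2)}_{1,1}\big)\Big\}.$$
   Context: Setting (UOFP-type multibaker chain, bulk). Fix $D>0$, $v\in\mathbb R$, a time step $\tau>0$ and a site width $\Delta r>0$; put $\beta=2\tau D/\Delta r^2$ and $Pe_g=v\Delta r/D$. The bulk transition probabilities are $\eta(0)=\frac{\beta}{2}(1-\frac{Pe_g}{2})$, $\eta(1)=1-\beta$, $\eta(2)=\frac{\beta}{2}(1+\frac{Pe_g}{2})$, and $\nu(\omega)=\eta(2-\omega)$ for $\omega\in\{0,1,2\}$; all are assumed positive. As $\Delta r\to0$, $\beta=O(\Delta r^{b})$ for some $b\ge0$. Write $I_\omega=1-\omega$. Sites are indexed by integers $n$; each site is a rectangle of width $\Delta r$ and height $h$, partitioned (Markov partition) into cells $(n,\underline\omega_k)$, $\underline\omega_k=\omega_0\cdots\omega_{k-1}$ a $k$-digit trit string ($k\ge1$ fixed), of volume $\Delta r\,h\,\nu(\underline\omega_k)$, $\nu(\underline\omega_k)=\prod_j\nu(\omega_j)$. Write $\overleftarrow{\underline\omega}_{k-1}=\omega_1\cdots\omega_{k-1}$. $\rho^{(l)}(n,\underline\omega_k)$ is the probability of cell $(n,\underline\omega_k)$ at step $l$ divided by its volume. In the bulk, $\rho^{(l)}(n,\underline\omega_k)=\frac{\eta(\omega_0)}{\nu(\omega_0)}\rho^{(l-1)}(n+1-\omega_0,\overleftarrow{\underline\omega}_{k-1})$ and the expansion rate of cell $(n,\underline\omega_k)$ is $\nu(\omega_0)/\eta(\omega_0)$. Continuum limit: $\Delta r\to0$ with $k$ fixed;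 site densities come from a smooth field $\rho(r,t)$, and $\rho^{(l)}_n$, $(\rho_r)^{(l)}_n$, $(\rho_{rr})^{(l)}_n$ denote $\rho$, $\partial_r\rho$, $\partial_r^2\rho$ at $r=n\Delta r$, $t=l\tau$; formal Taylor expansions in $\Delta r$ of $\rho^{(l-1)}(n+1-\omega_0,\cdot)$ about $\rho^{(l-1)}(n,\cdot)$ are assumed valid, and for families $B$ obeying the same recursion as $\rho$ and smooth $g$, $\sum_{\overleftarrow{\underline\omega}_{k-1}}\nu(\overleftarrow{\underline\omega}_{k-1})g(B^{(l-1)}_n(\overleftarrow{\underline\omega}_{k-1}))=g(B^{(l)}_n)+O(\Delta r)$. $T^1$-type local quantity: for cells $i,j$, $\tilde W_{ji}=W_{ji}\Delta V_i$ ($W_{ji}$ the transition probability $i\to j$, $\Delta V_i$ the volume), $e_i=\Delta V_i/\sum_k\tilde W_{ik}$, signs $\epsilon,\delta\in\{\pm1\}$, $A^{(l)}_{ij}=[(1+\delta e_j)\tilde W_{ji}+\epsilon(1+\delta e_i)\tilde W_{ij}]f(\rho_j^{(l)},\rho_i^{(l)})$, $A_i^{(l)}=\sum_jA_{ij}^{(l)}$, where $f$ is $C^\infty$, symmetric or antisymmetric, and with $X=(x-y)/2$, $Y=(x+y)/2$, $f(x,y)=\hat C(Y)X^m+C^{(m+2)}(Y)X^{m+2}+\cdots$ near $X=0$ for a nonnegative integer $m$ and a nonzero bounded smooth function $\hat C$. The average on a union $R$ of cells is $\langle A\rangle^{(l)}_R=\frac{1}{\tau\Delta V_R}\sum_{i\subset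 R}A^{(l)}_i$; on a bulk site it equals $K/(\tau\Delta r)$ with $K=\sum_\omega\sum_{\underline\omega_k}(\eta(\omega)+\delta\nu(\omega))\nu(\underline\omega_k)[F_n^{(l)}+\epsilon(-1)^mF^{(l)}_{n+1-\omega}](\omega,\underline\omega_k)\Delta r$, $F^{(l)}_n(\omega,\underline\omega_k)=f\big(\frac{\eta(\omega)}{\nu(\omega)}\rho^{(l-1)}(n,\overleftarrow{\underline\omega}_{k-1}),\frac{\eta(\omega_0)}{\nu(\omega_0)}\rho^{(l-1)}(n+1-\omega_0,\overleftarrow{\underline\omega}_{k-1})\big)$. Notation (all evaluated at site $n$, step $l$; write $\rho=\rho^{(l)}_n$, $\rho_r=(\rho_r)^{(l)}_n$, $\rho_{rr}=(\rho_{rr})^{(l)}_n$): $X_{1,0}=\frac{v}{D}\rho$, $X_{0,1}=-\frac{v}{D}\rho+\rho_r$; $Y^{(1)}_{1,0}=\frac vD\rho$, $Y^{(2)}_{1,0}=\frac vD\rho-2\rho_r$, $Y^{(1)}_{0,1}=Y^{(2)}_{0,1}=\frac vD\rho-\rho_r$; $X^{(1)}_{2,0}=(\frac vD)^2\rho$, $X^{(2)}_{2,0}=(\frac vD)^2\rho-\frac{2v}{D}\rho_r$; $X^{(1)}_{1,1}=0$, $X^{(2)}_{1,1}=\frac{2v}{D}\rho_r-2\rho_{rr}$; $X^{(1)}_{0,2}=X^{(2)}_{0,2}=-(\frac vD)^2\rho+\frac{2v}{D}\rho_r-\rho_{rr}$. For an integer $a$, $S_\nu(a)=1$ if $a=0$,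 $S_\nu(a)=\beta Pe_g/2$ if $a$ is odd, $S_\nu(a)=\beta$ if $a\ne0$ is even. Empty sums ($\sum_{p=a}^b$ with $b<a$) are zero. *)

From Stdlib Require Import Reals Lra Lia ZArith List.
Import ListNotations.
Open Scope R_scope.

(* digits omega are encoded as naturals 0,1,2 *)
Definition eta (beta Peg : R) (w : nat) : R :=
  match w with
  | O => beta / 2 * (1 - Peg / 2)
  | S O => 1 - beta
  | _ => beta / 2 * (1 + Peg / 2)
  end.

Definition nu (beta Peg : R) (w : nat) : R := eta beta Peg (2 - w).

Definition Iw (w : nat) : Z := (1 - Z.of_nat w)%Z.

Fixpoint trits (k : nat) : list (list nat) :=
  match k with
  | O => [[]]
  | S k' => flat_map (fun w => map (fun x => x :: w) [0%nat; 1%nat; 2%nat]) (trits k')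
  end.

Definition lsum {A : Type} (l : list A) (g : A -> R) : R :=
  fold_right (fun a acc => g a + acc) 0 l.

Fixpoint sumlt (N : nat) (g : nat -> R) : R :=
  match N with
  | O => 0
  | S N' => sumlt N' g + g N'
  end.

Definition nuw (beta Peg : R) (w : list nat) : R :=
  fold_right (fun x acc => nu beta Peg x * acc) 1 w.

(* cell densities: rho^(l)(n, omega_0 ... omega_{j-1}) obtained from the
   bulk recursion rho^(l)(n, w0 :: w') = eta(w0)/nu(w0) rho^(l-1)(n+1-w0, w'),
   the empty string giving the site density sd n l = rho^(l)_n *)
Fixpoint celldens (beta Peg : R) (sd : Z -> Z -> R) (l n : Z) (w : list nat) : R :=
  match w with
  | [] => sd n l
  | x :: w' => eta beta Peg x / nu beta Peg x * celldens beta Peg sd (l - 1)%Z (n + Iw x)%Z w'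
  end.

Definition Ffun (beta Peg : R) (f : R -> R -> R) (sd : Z -> Z -> R) (l n : Z)
    (w : nat) (wk : list nat) : R :=
  match wk with
  | [] => 0
  | w0 :: wp =>
      f (eta beta Peg w / nu beta Peg w * celldens beta Peg sd (l - 1)%Z n wp)
        (eta beta Peg w0 / nu beta Peg w0 * celldens beta Peg sd (l - 1)%Z (n + Iw w0)%Z wp)
  end.

Definition Kval (D v beta dr : R) (k m : nat) (eps delta : R) (f : R -> R -> R)
    (sd : Z -> Z -> R) (n l : Z) : R :=
  let Peg := v * dr / D in
  lsum [0%nat; 1%nat; 2%nat] (fun w =>
    lsum (trits k) (fun wk =>
      (eta beta Peg w + delta * nu beta Peg w) * nuw beta Peg wk *
      (Ffun beta Peg f sd l n w wk + eps * (-1) ^ m * Ffun beta Peg f sd l (n + Iw w)%Z w wk)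
      * dr)).

Definition tau_of (D beta dr : R) : R := beta * dr ^ 2 / (2 * D).

Definition avgA (D v beta dr : R) (k m : nat) (eps delta : R) (f : R -> R -> R)
    (sd : Z -> Z -> R) (n l : Z) : R :=
  Kval D v beta dr k m eps delta f sd n l / (tau_of D beta dr * dr).

Definition Snu (beta Peg : R) (a : nat) : R :=
  if Nat.eqb a 0 then 1 else if Nat.odd a then beta * Peg / 2 else beta.

(* T1 + T2 + T3, with rho, rho_r, rho_rr, Chat, Chat_rho given as numbers and
   m = 2 m' + 1 *)
Definition Tsum (D v beta Peg eps delta : R) (m' : nat)
    (rho rr rrr Ch Chr : R) : R :=
  let m := (2 * m' + 1)%nat in
  let X10 := v / D * rho in
  let X01 := - (v / D) * rho + rr in
  let Y110 := v / D * rho in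
  let Y210 := v / D * rho - 2 * rr in
  let Y101 := v / D * rho - rr in
  let Y201 := v / D * rho - rr in
  let X120 := (v / D) ^ 2 * rho in
  let X220 := (v / D) ^ 2 * rho - 2 * v / D * rr in
  let X111 := 0 in
  let X211 := 2 * v / D * rr - 2 * rrr in
  let X102 := - (v / D) ^ 2 * rho + 2 * v / D * rr - rrr in
  let X202 := - (v / D) ^ 2 * rho + 2 * v / D * rr - rrr in
  let Sv := Snu beta Peg in
  let T1 :=
    - (1 + eps * (-1) ^ m) * (v * Ch / 2 ^ m) *
      ((delta + 1) * sumlt (Datatypes.S m') (fun p =>
          Binomial.C m (2 * p) * X10 ^ (2 * p) * X01 ^ (2 * (m' - p) + 1) * Sv (2 * p)%nat)
     + (delta - 1) * sumlt (Datatypes.S m') (fun p =>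
          Binomial.C m (2 * p + 1) * X10 ^ (2 * p + 1) * X01 ^ (2 * (m' - p))
          * Sv (2 * (m' - p))%nat)) in
  let T2 :=
    (delta + 1) * (D / 2 ^ m) * Chr *
      (sumlt (Datatypes.S m') (fun p =>
          Binomial.C m (2 * p) * X10 ^ (2 * p) * X01 ^ (2 * (m' - p) + 1)
          * (Y101 - eps * Y201) * Sv (2 * p)%nat)
     + sumlt (Datatypes.S m') (fun p =>
          Binomial.C m (2 * p + 1) * X10 ^ (2 * p + 1) * X01 ^ (2 * (m' - p))
          * (Y110 - eps * Y210) * Sv (2 * (m' - p))%nat)) in
  let T3 :=
    (delta + 1) * (INR m * D / 2 ^ m) * Ch *
      (sumlt (Datatypes.S m') (fun p =>
          Binomial.C (2 * m') (2 * p) * X10 ^ (2 * p) * X01 ^ (2 * (m' - p)) *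
          (X120 * Sv (2 * (m' - p))%nat + X102 * Sv (2 * p)%nat
           - eps * (X220 * Sv (2 * (m' - p))%nat + X202 * Sv (2 * p)%nat)))
     + beta * sumlt m' (fun p =>
          Binomial.C (2 * m') (2 * p + 1) * X10 ^ (2 * p + 1) * X01 ^ (2 * (m' - p) - 1)
          * (X111 - eps * X211))) in
  T1 + T2 + T3.

Definition smooth1 (F : R -> R) : Prop :=
  exists d : nat -> R -> R, d O = F /\
    forall (j : nat) (x : R), derivable_pt_lim (d j) x (d (S j) x).

Definition continuous2 (g : R -> R -> R) : Prop :=
  forall x y e, 0 < e -> exists d, 0 < d /\
    forall x' y', Rabs (x' - x) < d -> Rabs (y' - y) < d ->
      Rabs (g x' y' - g x y) < e.

Definition smooth2 (g : R -> R -> R) : Prop :=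
  exists d : nat -> nat -> R -> R -> R, d O O = g /\
    (forall i j x y,
        derivable_pt_lim (fun s => d i j s y) x (d (S i) j x y) /\
        derivable_pt_lim (fun s => d i j x s) y (d i (S j) x y)) /\
    (forall i j, continuous2 (d i j)).

From Coquelicot Require Import Rcomplements Hierarchy Derive AutoDerive Compactness.
From Stdlib Require Import Reals Lra Lia ZArith List Classical ClassicalEpsilon FunctionalExtensionality.
Import ListNotations.
Open Scope R_scope.

(* Write h = Delta r, P = v h / D and b = beta(h).  With tau = b h^2 / (2D),
   the site average is 2D/(b h^2) times the sum over pairs (w, w0) of leading
   digits of (eta(w) + delta nu(w)) nu(w0) (G_n - eps G_(n+I_w)), where G is the
   nu-average over the trailing digits of the values F of f in the cells; the
   diagonal pair (1,1) drops out because f vanishes on the diagonal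
   (avgA_offdiag). *)

Lemma lsum_app {A} (l1 l2 : list A) (g : A -> R) :
  lsum (l1 ++ l2) g = lsum l1 g + lsum l2 g.
Proof. induction l1 as [|a l1 IH]; simpl; [ring|]. unfold lsum in *; simpl; rewrite IH; ring. Qed.

Lemma lsum_flat_map {A B} (h : A -> list B) (l : list A) (g : B -> R) :
  lsum (flat_map h l) g = lsum l (fun a => lsum (h a) g).
Proof.
  induction l as [|a l IH]; [reflexivity|].
  simpl. rewrite lsum_app. unfold lsum in *; simpl; rewrite IH; ring.
Qed.

Lemma lsum_ext {A} (l : list A) (g1 g2 : A -> R) :
  (forall a, In a l -> g1 a = g2 a) -> lsum l g1 = lsum l g2.
Proof.
  induction l as [|a l IH]; intros H; [reflexivity|]. unfold lsum in *; simpl.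
  rewrite H by (left; reflexivity). rewrite IH; [ring|]. intros; apply H; right; auto.
Qed.

Lemma lsum_plus {A} (l : list A) (g1 g2 : A -> R) :
  lsum l (fun a => g1 a + g2 a) = lsum l g1 + lsum l g2.
Proof. induction l as [|a l IH]; unfold lsum in *; simpl; [ring|]. rewrite IH; ring. Qed.

Lemma lsum_scal {A} (l : list A) (c : R) (g : A -> R) :
  lsum l (fun a => c * g a) = c * lsum l g.
Proof. induction l as [|a l IH]; unfold lsum in *; simpl; [ring|]. rewrite IH; ring. Qed.

Lemma lsum_const {A} (l : list A) (c : R) : lsum l (fun _ => c) = INR (length l) * c.
Proof.
  induction l as [|a l IH]; [unfold lsum; simpl; ring|].
  change (lsum (a :: l) (fun _ => c)) with (c + lsum l (fun _ => c)).
  rewrite IH. simpl length. rewrite S_INR. ring.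
Qed.

Lemma lsum_le {A} (l : list A) (g1 g2 : A -> R) :
  (forall a, In a l -> g1 a <= g2 a) -> lsum l g1 <= lsum l g2.
Proof.
  induction l as [|a l IH]; intros H; unfold lsum in *; simpl; [lra|].
  assert (g1 a <= g2 a) by (apply H; left; auto).
  assert (fold_right (fun a0 acc => g1 a0 + acc) 0 l <= fold_right (fun a0 acc => g2 a0 + acc) 0 l)
    by (apply IH; intros; apply H; right; auto).
  lra.
Qed.

Lemma lsum_abs {A} (l : list A) (g : A -> R) :
  Rabs (lsum l g) <= lsum l (fun a => Rabs (g a)).
Proof.
  induction l as [|a l IH]; unfold lsum in *; simpl; [rewrite Rabs_R0; lra|].
  eapply Rle_trans; [apply Rabs_triang|]. lra.
Qed.

Lemma lsum_abs_bound {A} (l : list A) (g : A -> R) (B : R) :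
  (forall a, In a l -> Rabs (g a) <= B) -> Rabs (lsum l g) <= INR (length l) * B.
Proof.
  intros H. eapply Rle_trans; [apply lsum_abs|]. rewrite <- lsum_const. apply lsum_le. exact H.
Qed.

Lemma lsum_digits (g : nat -> R) : lsum [0%nat; 1%nat; 2%nat] g = g 0%nat + g 1%nat + g 2%nat.
Proof. unfold lsum; simpl; ring. Qed.

Lemma lsum_trits_S (k : nat) (g : list nat -> R) :
  lsum (trits (S k)) g =
  lsum (trits k) (fun wp => g (0%nat :: wp) + g (1%nat :: wp) + g (2%nat :: wp)).
Proof. simpl. rewrite lsum_flat_map. apply lsum_ext. intros a _. unfold lsum; simpl. ring. Qed.

Definition is_digit (w : nat) : Prop := (w = 0 \/ w = 1 \/ w = 2)%nat.

Lemma trits_digits (k : nat) (wp : list nat) :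
  In wp (trits k) -> length wp = k /\ Forall is_digit wp.
Proof.
  revert wp; induction k as [|k IH]; intros wp H.
  - destruct H as [H|[]]. subst. split; auto.
  - simpl in H. apply in_flat_map in H. destruct H as [w [Hw Hin]].
    destruct (IH w Hw) as [H1 H2]. simpl in Hin.
    destruct Hin as [<-|[<-|[<-|[]]]]; simpl; split; try lia; constructor; unfold is_digit; auto.
Qed.

Definition IwR (w : nat) : R := IZR (Iw w).
Definition shiftZ (w : list nat) : Z := fold_right (fun x acc => (Iw x + acc)%Z) 0%Z w.
Definition shiftR (w : list nat) : R := IZR (shiftZ w).

Lemma IwR_digit (w : nat) : is_digit w -> Rabs (IwR w) <= 1.
Proof.
  intros [-> | [-> | ->]]; unfold IwR, Iw; simpl; unfold Rabs; destruct Rcase_abs; lra.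
Qed.

Lemma shiftR_cons (x : nat) (w : list nat) : shiftR (x :: w) = IwR x + shiftR w.
Proof. unfold shiftR, IwR. simpl. rewrite plus_IZR. reflexivity. Qed.

Lemma shiftR_bound (w : list nat) : Forall is_digit w -> Rabs (shiftR w) <= INR (length w).
Proof.
  induction 1 as [|x w Hx Hw IH]; [unfold shiftR; simpl; rewrite Rabs_R0; lra|].
  rewrite shiftR_cons; simpl length; rewrite S_INR.
  eapply Rle_trans; [apply Rabs_triang|]. pose proof (IwR_digit x Hx). lra.
Qed.

Lemma nuw_cons b P x w : nuw b P (x :: w) = nu b P x * nuw b P w.
Proof. reflexivity. Qed.

Lemma nu_total b P : nu b P 0 + nu b P 1 + nu b P 2 = 1.
Proof. unfold nu, eta; simpl. field. Qed.

Lemma nu_first_moment b P : nu b P 0 - nu b P 2 = b * P / 2.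
Proof. unfold nu, eta; simpl. field. Qed.

Lemma nu_nonneg b P w : 0 < b < 1 -> Rabs P <= 1 -> is_digit w -> 0 <= nu b P w.
Proof.
  intros Hb HP Hw. apply Rabs_le_between in HP.
  destruct Hw as [-> | [-> | ->]]; unfold nu, eta; simpl; nra.
Qed.

Lemma lsum_nuw k b P : lsum (trits k) (nuw b P) = 1.
Proof.
  induction k as [|k IH]; [unfold lsum, nuw; simpl; ring|].
  rewrite lsum_trits_S, <- IH. apply lsum_ext. intros. rewrite !nuw_cons.
  pose proof (nu_total b P). nra.
Qed.

Lemma lsum_nuw_shift k b P :
  lsum (trits k) (fun wp => nuw b P wp * shiftR wp) = INR k * (nu b P 0 - nu b P 2).
Proof.
  induction k as [|k IH]; [unfold lsum, nuw, shiftR, shiftZ; simpl; ring|].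
  rewrite lsum_trits_S.
  transitivity (lsum (trits k) (fun wp => nuw b P wp * shiftR wp + (nu b P 0 - nu b P 2) * nuw b P wp)).
  - apply lsum_ext. intros wp _. rewrite !nuw_cons, !shiftR_cons.
    unfold IwR, Iw; simpl. pose proof (nu_total b P). nra.
  - rewrite lsum_plus, lsum_scal, IH, lsum_nuw, S_INR. ring.
Qed.

Lemma nuw_nonneg b P wp :
  0 <= nu b P 0 -> 0 <= nu b P 1 -> 0 <= nu b P 2 -> Forall is_digit wp -> 0 <= nuw b P wp.
Proof.
  intros H0 H1 H2 HF. induction HF as [|x w Hx Hw IH]; [unfold nuw; simpl; lra|].
  rewrite nuw_cons. apply Rmult_le_pos; auto. destruct Hx as [-> | [-> | ->]]; auto.
Qed.

Definition ratio b P (x : nat) : R := eta b P x / nu b P x.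
Definition ratio_prod b P (w : list nat) : R := fold_right (fun x acc => ratio b P x * acc) 1 w.

Lemma celldens_closed b P sd w : forall l n,
  celldens b P sd l n w = ratio_prod b P w * sd (n + shiftZ w)%Z (l - Z.of_nat (length w))%Z.
Proof.
  induction w as [|x w IH]; intros l n; simpl.
  - rewrite Rmult_1_l. f_equal; lia.
  - rewrite IH. unfold ratio. rewrite Rmult_assoc. do 3 f_equal; lia.
Qed.

(* Mean-value estimate: a derivative bounded by c|s|^j on [-S, S] makes the
   increment from 0 bounded by c|s|^(j+1). *)
Lemma mvt_bound (phi phi' : R -> R) (Sd c : R) (j : nat) :
  0 <= c ->
  (forall s, -Sd <= s <= Sd -> derivable_pt_lim phi s (phi' s)) ->
  (forall s, -Sd <= s <= Sd -> Rabs (phi' s) <= c * Rabs s ^ j) ->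
  forall s, -Sd <= s <= Sd -> Rabs (phi s - phi 0) <= c * Rabs s ^ (S j).
Proof.
  intros Hc Hd Hb s Hs.
  (* On an interval [a, b] with an endpoint at 0, every point is within b - a of 0. *)
  assert (Hseg : forall a b, -Sd <= a -> a < b -> b <= Sd -> (a = 0 \/ b = 0) ->
            Rabs (phi b - phi a) <= c * (b - a) ^ S j).
  { intros a b Ha Hab Hb' H0.
    destruct (MVT_cor2 phi phi' a b Hab) as [x [Hx1 Hx2]]; [intros; apply Hd; lra|].
    rewrite Hx1, Rabs_mult, (Rabs_pos_eq (b - a)) by lra. simpl.
    assert (Hx : Rabs x ^ j <= (b - a) ^ j).
    { apply pow_incr. split; [apply Rabs_pos|]. apply Rabs_le_between. lra. }
    pose proof (Hb x ltac:(lra)). pose proof (pow_le (Rabs x) j (Rabs_pos x)).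
    apply Rle_trans with (c * Rabs x ^ j * (b - a)); [apply Rmult_le_compat_r; lra|].
    rewrite (Rmult_comm (b - a)), <- Rmult_assoc. apply Rmult_le_compat_r; [lra|].
    apply Rmult_le_compat_l; lra. }
  destruct (Rtotal_order s 0) as [Hlt|[->|Hgt]].
  - rewrite <- Rabs_Ropp, Ropp_minus_distr, (Rabs_left s) by lra.
    replace (- s) with (0 - s) by ring. apply Hseg; lra.
  - rewrite Rminus_diag, Rabs_R0. simpl. nra.
  - rewrite (Rabs_pos_eq s) by lra.
    pose proof (Hseg 0 s ltac:(lra) Hgt ltac:(lra) ltac:(auto)) as H.
    rewrite Rminus_0_r in H. exact H.
Qed.

Lemma dpl_shift (F : R -> R) (x s l : R) :
  derivable_pt_lim F (x + s) l -> derivable_pt_lim (fun u => F (x + u)) s l.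
Proof.
  intros H e He. destruct (H e He) as [d Hd]. exists d.
  intros u Hu Hud. replace (x + (s + u)) with (x + s + u) by ring. apply Hd; auto.
Qed.

Lemma dpl_sub_linear (F : R -> R) (c s l : R) :
  derivable_pt_lim F s l -> derivable_pt_lim (fun u => F u - u * c) s (l - c).
Proof.
  intros H. apply (derivable_pt_lim_minus F (fun u => u * c)); [exact H|].
  apply is_derive_Reals. auto_derive; [auto|ring].
Qed.

Lemma dpl_sub_quadratic (F : R -> R) (c1 c2 s l : R) :
  derivable_pt_lim F s l ->
  derivable_pt_lim (fun u => F u - u * c1 - u * u / 2 * c2) s (l - c1 - s * c2).
Proof.
  intros H. apply (derivable_pt_lim_minus (fun u => F u - u * c1) (fun u => u * u / 2 * c2)).
  - apply dpl_sub_linear, H.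
  - apply is_derive_Reals. auto_derive; [auto|field].
Qed.

Lemma taylor1 (d0 d1 d2 : R -> R) (x B : R) :
  0 <= B ->
  (forall y, x - 1 <= y <= x + 1 -> derivable_pt_lim d0 y (d1 y)) ->
  (forall y, x - 1 <= y <= x + 1 -> derivable_pt_lim d1 y (d2 y)) ->
  (forall y, x - 1 <= y <= x + 1 -> Rabs (d2 y) <= B) ->
  forall s, Rabs s <= 1 -> Rabs (d0 (x + s) - d0 x - s * d1 x) <= B * Rabs s ^ 2.
Proof.
  intros HB H0 H1 H2 s Hs.
  assert (Hlip : forall u, -1 <= u <= 1 -> Rabs (d1 (x + u) - d1 x) <= B * Rabs u ^ 1).
  { intros u Hu. rewrite <- (Rplus_0_r x) at 2.
    apply (mvt_bound (fun u => d1 (x + u)) (fun u => d2 (x + u)) 1 B 0); auto.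
    - intros; apply dpl_shift, H1; lra.
    - intros; simpl; rewrite Rmult_1_r; apply H2; lra. }
  pose proof (mvt_bound (fun u => d0 (x + u) - u * d1 x) (fun u => d1 (x + u) - d1 x) 1 B 1 HB)
    as Hm.
  simpl in Hm. rewrite Rplus_0_r in Hm.
  replace (d0 (x + s) - d0 x - s * d1 x) with (d0 (x + s) - s * d1 x - (d0 x - 0 * d1 x)) by ring.
  apply Hm; [| |apply Rabs_le_between; exact Hs].
  - intros u Hu. apply (dpl_sub_linear (fun u => d0 (x + u))). apply dpl_shift, H0. lra.
  - intros u Hu. rewrite Rmult_1_r. pose proof (Hlip u Hu). simpl in H. lra.
Qed.

Lemma taylor2 (d0 d1 d2 d3 : R -> R) (x B : R) :
  0 <= B ->
  (forall y, x - 1 <= y <= x + 1 -> derivable_pt_lim d0 y (d1 y)) ->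
  (forall y, x - 1 <= y <= x + 1 -> derivable_pt_lim d1 y (d2 y)) ->
  (forall y, x - 1 <= y <= x + 1 -> derivable_pt_lim d2 y (d3 y)) ->
  (forall y, x - 1 <= y <= x + 1 -> Rabs (d3 y) <= B) ->
  forall s, Rabs s <= 1 ->
    Rabs (d0 (x + s) - d0 x - s * d1 x - s * s / 2 * d2 x) <= B * Rabs s ^ 3.
Proof.
  intros HB H0 H1 H2 H3 s Hs.
  pose proof (taylor1 d1 d2 d3 x B HB H1 H2 H3) as Hd1.
  pose proof (mvt_bound (fun u => d0 (x + u) - u * d1 x - u * u / 2 * d2 x)
                (fun u => d1 (x + u) - d1 x - u * d2 x) 1 B 2 HB) as Hm.
  simpl in Hm. rewrite Rplus_0_r in Hm.
  replace (d0 (x + s) - d0 x - s * d1 x - s * s / 2 * d2 x)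
    with (d0 (x + s) - s * d1 x - s * s / 2 * d2 x - (d0 x - 0 * d1 x - 0 * 0 / 2 * d2 x)) by field.
  apply Hm; [| |apply Rabs_le_between; exact Hs].
  - intros u Hu. apply (dpl_sub_quadratic (fun u => d0 (x + u))). apply dpl_shift, H0. lra.
  - intros u Hu. apply Rabs_le_between in Hu. pose proof (Hd1 u Hu). simpl in H. lra.
Qed.

Lemma continuous2_bounded (g : R -> R -> R) : continuous2 g ->
  forall R0 T0, exists B, 0 <= B /\
    forall x y, Rabs x <= R0 -> Rabs y <= T0 -> Rabs (g x y) <= B.
Proof.
  intros Hg R0 T0.
  assert (Hloc : forall p : Tn 2 R, {d : posreal | forall x y,
      Rabs (x - fst p) < d -> Rabs (y - fst (snd p)) < d ->
      Rabs (g x y - g (fst p) (fst (snd p))) < 1}).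
  { intros p. apply constructive_indefinite_description.
    destruct (Hg (fst p) (fst (snd p)) 1 Rlt_0_1) as [d [Hd1 Hd2]].
    exists (mkposreal d Hd1). exact Hd2. }
  set (delta := fun p => proj1_sig (Hloc p)).
  apply NNPP. intro Hn.
  apply (compactness_list 2 (-R0, (-T0, tt)) (R0, (T0, tt)) delta). intros [l Hl].
  apply Hn.
  set (mx := fun (p : Tn 2 R) acc => Rmax (Rabs (g (fst p) (fst (snd p))) + 1) acc).
  assert (Hmem : forall (l0 : list (Tn 2 R)) (p : Tn 2 R), In p l0 ->
            Rabs (g (fst p) (fst (snd p))) + 1 <= fold_right mx 0 l0).
  { induction l0 as [|q l0 IH]; simpl; [tauto|]; intros p [<-|H].
    - apply Rmax_l.
    - eapply Rle_trans; [apply IH, H|apply Rmax_r]. }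
  assert (Hnn : forall l0, 0 <= fold_right mx 0 l0).
  { induction l0; simpl; [lra|]. eapply Rle_trans; [exact IHl0|apply Rmax_r]. }
  set (Bl := fold_right mx 0 l).
  assert (HBl : 0 <= Bl) by apply Hnn.
  exists Bl. split; [exact HBl|]. intros x y Hx Hy.
  destruct (Hl (x, (y, tt))) as [[t1 [t2 []]] [Ht1 [_ Ht3]]].
  { apply Rabs_le_between in Hx, Hy. simpl. tauto. }
  destruct Ht3 as [Hc1 [Hc2 _]].
  pose proof (proj2_sig (Hloc (t1, (t2, tt))) x y Hc1 Hc2) as Hc. simpl in Hc.
  pose proof (Hmem l _ Ht1) as Hm. simpl in Hm.
  pose proof (Rabs_triang_inv (g x y) (g t1 t2)).
  apply Rle_trans with (Rabs (g t1 t2) + 1); [lra|exact Hm].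
Qed.

Lemma continuous1_bounded (F : R -> R) (M : R) : (forall x, continuity_pt F x) ->
  exists B, 0 <= B /\ forall x, Rabs x <= M -> Rabs (F x) <= B.
Proof.
  intros HF. destruct (Rle_dec (-M) M) as [HM|HM].
  - destruct (continuity_ab_maj F (-M) M HM) as [x1 [H1 _]]; [intros; auto|].
    destruct (continuity_ab_min F (-M) M HM) as [x2 [H2 _]]; [intros; auto|].
    exists (Rabs (F x1) + Rabs (F x2)).
    split; [pose proof (Rabs_pos (F x1)); pose proof (Rabs_pos (F x2)); lra|].
    intros x Hx. apply Rabs_le_between in Hx.
    specialize (H1 x Hx). specialize (H2 x Hx).
    pose proof (Rle_abs (F x1)). pose proof (Rabs_pos (F x1)). pose proof (Rabs_pos (F x2)).
    pose proof (Rle_abs (- F x2)) as Hx2. rewrite Rabs_Ropp in Hx2.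
    apply Rabs_le_between. split; lra.
  - exists 0. split; [lra|]. intros x Hx. pose proof (Rabs_pos x). lra.
Qed.

Lemma bound_over_range (P : nat -> R -> Prop) (N : nat) :
  (forall i B B', P i B -> B <= B' -> P i B') ->
  (forall i, (i <= N)%nat -> exists B, 0 <= B /\ P i B) ->
  exists B, 0 <= B /\ forall i, (i <= N)%nat -> P i B.
Proof.
  intros Hmono Hex. induction N as [|N IH].
  - destruct (Hex 0%nat (le_n 0)) as [B [HB HP]]. exists B. split; auto.
    intros i Hi. replace i with 0%nat by lia. exact HP.
  - destruct IH as [B1 [HB1 HP1]]; [intros; apply Hex; lia|].
    destruct (Hex (S N) (le_n _)) as [B2 [HB2 HP2]].
    exists (B1 + B2). split; [lra|]. intros i Hi.
    destruct (Nat.eq_dec i (S N)) as [->|Hne].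
    + apply (Hmono _ B2); auto; lra.
    + apply (Hmono _ B1); [apply HP1; lia|lra].
Qed.

Lemma partials_bounded (d : nat -> nat -> R -> R -> R) :
  (forall i j, continuous2 (d i j)) ->
  forall N R1 T1, exists B, 0 <= B /\
    forall i j x y, (i <= N)%nat -> (j <= 1)%nat -> Rabs x <= R1 -> Rabs y <= T1 ->
      Rabs (d i j x y) <= B.
Proof.
  intros Hc N R1 T1.
  destruct (bound_over_range (fun i B => forall j x y, (j <= 1)%nat -> Rabs x <= R1 ->
              Rabs y <= T1 -> Rabs (d i j x y) <= B) N) as [B [HB HP]].
  - intros i B B' HP HBB j x y Hj Hx Hy. eapply Rle_trans; [apply HP|]; auto.
  - intros i _.
    destruct (bound_over_range (fun j B => forall x y, Rabs x <= R1 -> Rabs y <= T1 ->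
                Rabs (d i j x y) <= B) 1) as [B [HB HP]].
    + intros j B B' HP HBB x y Hx Hy. eapply Rle_trans; [apply HP|]; auto.
    + intros j _. apply continuous2_bounded, Hc.
    + exists B. split; auto.
  - exists B. split; auto.
Qed.

Lemma density_estimates (rho rho_r rho_rr : R -> R -> R) :
  smooth2 rho ->
  (forall r t, derivable_pt_lim (fun s => rho s t) r (rho_r r t)) ->
  (forall r t, derivable_pt_lim (fun s => rho_r s t) r (rho_rr r t)) ->
  forall R1 T1, exists B, 0 <= B /\
  (forall x t, Rabs x <= R1 -> Rabs t <= T1 ->
     Rabs (rho x t) <= B /\ Rabs (rho_r x t) <= B /\ Rabs (rho_rr x t) <= B) /\
  (forall x t s, Rabs x <= R1 -> Rabs t <= T1 -> Rabs s <= 1 ->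
     Rabs (rho (x + s) t - rho x t - s * rho_r x t - s * s / 2 * rho_rr x t) <= B * Rabs s ^ 3) /\
  (forall x t s, Rabs x <= R1 -> Rabs t <= T1 -> Rabs s <= 1 ->
     Rabs (rho x (t + s) - rho x t) <= B * Rabs s /\
     Rabs (rho_r x (t + s) - rho_r x t) <= B * Rabs s /\
     Rabs (rho_rr x (t + s) - rho_rr x t) <= B * Rabs s).
Proof.
  intros [d [Hd0 [Hdd Hdc]]] Hrho_r Hrho_rr R1 T1.
  assert (E0 : forall x t, rho x t = d 0%nat 0%nat x t) by (intros; rewrite Hd0; auto).
  assert (E1 : forall x t, rho_r x t = d 1%nat 0%nat x t).
  { intros x t. eapply uniqueness_limite; [apply Hrho_r|].
    rewrite <- Hd0. apply (proj1 (Hdd 0%nat 0%nat x t)). }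
  assert (E2 : forall x t, rho_rr x t = d 2%nat 0%nat x t).
  { intros x t. eapply uniqueness_limite; [apply Hrho_rr|].
    replace (fun s => rho_r s t) with (fun s => d 1%nat 0%nat s t)
      by (apply functional_extensionality; intros; rewrite E1; auto).
    apply (proj1 (Hdd 1%nat 0%nat x t)). }
  destruct (partials_bounded d Hdc 3 (R1 + 1) (T1 + 1)) as [B [HB Hbd]].
  exists B. split; [exact HB|].
  assert (Hnear : forall a A u, Rabs a <= A -> -1 <= u <= 1 -> Rabs (a + u) <= A + 1).
  { intros a A u Ha Hu. apply Rabs_le_between in Ha. apply Rabs_le_between. lra. }
  split; [|split].
  - intros x t Hx Ht. rewrite E0, E1, E2.
    repeat split; apply Hbd; lia || lra.
  - intros x t s Hx Ht Hs. rewrite !E0, !E1, !E2.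
    apply (taylor2 (fun y => d 0%nat 0%nat y t) (fun y => d 1%nat 0%nat y t)
      (fun y => d 2%nat 0%nat y t) (fun y => d 3%nat 0%nat y t) x B); auto;
      try (intros; apply (proj1 (Hdd _ 0%nat y t))).
    intros y Hy. apply Hbd; try lia; try lra.
    replace y with (x + (y - x)) by ring. apply Hnear; auto; lra.
  - intros x t s Hx Ht Hs. rewrite !E0, !E1, !E2.
    assert (Hlip : forall i, (i <= 2)%nat ->
              Rabs (d i 0%nat x (t + s) - d i 0%nat x t) <= B * Rabs s).
    { intros i Hi. rewrite <- (Rplus_0_r t) at 2. rewrite <- (pow_1 (Rabs s)).
      apply (mvt_bound (fun u => d i 0%nat x (t + u)) (fun u => d i 1%nat x (t + u)) 1 B 0 HB);
        [| |apply Rabs_le_between; exact Hs].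
      - intros u _. apply dpl_shift, (proj2 (Hdd i 0%nat x (t + u))).
      - intros u Hu. simpl. rewrite Rmult_1_r. apply Hbd; try lia; try lra. apply Hnear; auto. }
    repeat split; apply Hlip; lia.
Qed.

Lemma coefficient_estimates (Chat Chat_rho : R -> R) :
  smooth1 Chat -> (forall y, derivable_pt_lim Chat y (Chat_rho y)) ->
  forall M, exists B, 0 <= B /\ forall g s, Rabs g <= M -> Rabs s <= 1 ->
    Rabs (Chat g) <= B /\ Rabs (Chat_rho g) <= B /\
    Rabs (Chat (g + s) - Chat g - s * Chat_rho g) <= B * Rabs s ^ 2.
Proof.
  intros [dC [H0 H1]] HCd M.
  assert (E1 : forall y, Chat_rho y = dC 1%nat y).
  { intros y. eapply uniqueness_limite; [apply HCd|]. rewrite <- H0. apply H1. }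
  destruct (bound_over_range (fun j B => forall x, Rabs x <= M + 1 -> Rabs (dC j x) <= B) 2)
    as [B [HB Hbd]].
  - intros j B B' HP HBB x Hx. eapply Rle_trans; [apply HP|]; auto.
  - intros j _. apply continuous1_bounded. intros x.
    apply derivable_continuous_pt. exists (dC (S j) x). apply H1.
  exists B. split; [exact HB|]. intros g s Hg Hs.
  rewrite E1, <- H0.
  split; [|split]; [apply Hbd; auto; lra|apply Hbd; auto; lra|].
  apply (taylor1 (dC 0%nat) (dC 1%nat) (dC 2%nat) g B HB); auto.
  intros y Hy. apply Hbd; auto. apply Rabs_le_between in Hg. apply Rabs_le_between. lra.
Qed.

(* Structural bounds: [bound_tac] proves [Rabs e <= ?B] by recursion on the
   shape of [e], using the hypotheses [Rabs x <= X] for its atoms; the bound it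
   builds is a polynomial in the atom bounds. *)
Lemma abs_add_le x y X Y : Rabs x <= X -> Rabs y <= Y -> Rabs (x + y) <= X + Y.
Proof. intros. eapply Rle_trans; [apply Rabs_triang|lra]. Qed.
Lemma abs_sub_le x y X Y : Rabs x <= X -> Rabs y <= Y -> Rabs (x - y) <= X + Y.
Proof. intros. unfold Rminus. apply abs_add_le; auto. rewrite Rabs_Ropp; auto. Qed.
Lemma abs_opp_le x X : Rabs x <= X -> Rabs (- x) <= X.
Proof. intros. rewrite Rabs_Ropp; auto. Qed.
Lemma abs_mul_le x y X Y : Rabs x <= X -> Rabs y <= Y -> Rabs (x * y) <= X * Y.
Proof. intros. rewrite Rabs_mult. apply Rmult_le_compat; auto; apply Rabs_pos. Qed.
Lemma abs_pow_le x X n : Rabs x <= X -> Rabs (x ^ n) <= X ^ n.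
Proof. intros. rewrite <- RPow_abs. apply pow_incr. split; auto. apply Rabs_pos. Qed.

Ltac bound_tac := first [eassumption | match goal with
  | |- Rabs (_ + _) <= _ => eapply abs_add_le; bound_tac
  | |- Rabs (_ - _) <= _ => eapply abs_sub_le; bound_tac
  | |- Rabs (- _) <= _ => eapply abs_opp_le; bound_tac
  | |- Rabs (_ * _) <= _ => eapply abs_mul_le; bound_tac
  | |- Rabs (_ / _) <= _ => unfold Rdiv; eapply abs_mul_le; bound_tac
  | |- Rabs (_ ^ _) <= _ => eapply abs_pow_le; bound_tac
  | |- _ => apply Rle_refl
  end].

(* This is the
   bookkeeping device for the small-step expansions of the cell densities. *)
Definition expands (K h x c0 c1 c2 : R) : Prop :=
  Rabs c0 <= K /\ Rabs c1 <= K /\ Rabs c2 <= K /\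
  exists E, Rabs E <= K /\ x = c0 + h * c1 + h ^ 2 * c2 + h ^ 3 * E.

Lemma expands_weaken K K' h x c0 c1 c2 :
  K <= K' -> expands K h x c0 c1 c2 -> expands K' h x c0 c1 c2.
Proof. intros HK (H0 & H1 & H2 & E & HE & ->). repeat split; try lra. exists E. split; [lra|ring]. Qed.

Lemma expands_coeffs K h x c0 c1 c2 c0' c1' c2' :
  c0 = c0' -> c1 = c1' -> c2 = c2' -> expands K h x c0 c1 c2 -> expands K h x c0' c1' c2'.
Proof. intros -> -> ->. auto. Qed.

Lemma expands_mul K h x y a0 a1 a2 b0 b1 b2 :
  0 <= K -> Rabs h <= 1 -> expands K h x a0 a1 a2 -> expands K h y b0 b1 b2 ->
  expands (10 * K ^ 2) h (x * y) (a0 * b0) (a0 * b1 + a1 * b0) (a0 * b2 + a1 * b1 + a2 * b0).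
Proof.
  intros HK Hh (Ha0 & Ha1 & Ha2 & Ex & HEx & ->) (Hb0 & Hb1 & Hb2 & Ey & HEy & ->).
  assert (Hsq : 0 <= K ^ 2) by (apply pow_le; lra).
  assert (Hle : forall e X, Rabs e <= X -> X <= 10 * K ^ 2 -> Rabs e <= 10 * K ^ 2) by (intros; lra).
  repeat split.
  - eapply Hle; [bound_tac|]. simpl; nra.
  - eapply Hle; [bound_tac|]. simpl; nra.
  - eapply Hle; [bound_tac|]. simpl; nra.
  - exists (a1 * b2 + a2 * b1 + h * (a2 * b2)
            + Ex * (b0 + h * b1 + h ^ 2 * b2) + Ey * (a0 + h * a1 + h ^ 2 * a2) + h ^ 3 * (Ex * Ey)).
    split; [|ring].
    eapply Hle; [bound_tac|]. simpl; nra.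
Qed.

Lemma expands_comb K h x y a0 a1 a2 b0 b1 b2 (alpha beta : R) :
  Rabs alpha + Rabs beta <= 1 -> expands K h x a0 a1 a2 -> expands K h y b0 b1 b2 ->
  expands K h (alpha * x + beta * y) (alpha * a0 + beta * b0) (alpha * a1 + beta * b1)
    (alpha * a2 + beta * b2).
Proof.
  intros Hab (Ha0 & Ha1 & Ha2 & Ex & HEx & ->) (Hb0 & Hb1 & Hb2 & Ey & HEy & ->).
  pose proof (Rabs_pos alpha). pose proof (Rabs_pos beta).
  assert (HK : 0 <= K) by (pose proof (Rabs_pos a0); lra).
  assert (Hc : forall a b, Rabs a <= K -> Rabs b <= K -> Rabs (alpha * a + beta * b) <= K).
  { intros a b Ha Hb. eapply Rle_trans; [apply abs_add_le; apply abs_mul_le; try apply Rle_refl; eauto|].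
    nra. }
  repeat split; auto. exists (alpha * Ex + beta * Ey). split; [auto|ring].
Qed.

Lemma below_min_div (h h0 c a : R) : 0 < a -> h < Rmin h0 (c / a) -> h < h0 /\ h * a < c.
Proof.
  intros Ha H. apply Rmin_Rgt in H. destruct H as [H1 H2]. split; [lra|].
  apply (Rmult_lt_compat_r a) in H2; [|lra]. unfold Rdiv in H2.
  rewrite Rmult_assoc, Rinv_l, Rmult_1_r in H2 by lra. exact H2.
Qed.

Lemma factor_le a b p : a * p + p * b <= (a + b) * p.
Proof. right; ring. Qed.

(* Powers of an expansion expand; only the first-order coefficient is needed
   explicitly. *)
Lemma expands_pow (m : nat) : forall K, 1 <= K -> exists K', 1 <= K' /\
  forall h x a0 a1 a2, Rabs h <= 1 -> expands K h x a0 a1 a2 ->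
    exists c2, expands K' h (x ^ m) (a0 ^ m) (INR m * a0 ^ (m - 1) * a1) c2.
Proof.
  induction m as [|m IH]; intros K HK.
  - exists K. split; [exact HK|]. intros h x a0 a1 a2 _ _. exists 0.
    repeat split; simpl; rewrite ?Rabs_R1, ?Rmult_0_l, ?Rmult_0_r, ?Rabs_R0; try lra.
    exists 0. split; [rewrite Rabs_R0; lra|ring].
  - destruct (IH K HK) as [Km [HKm HPm]].
    set (Kx := K + Km).
    exists (10 * Kx ^ 2). split; [unfold Kx; simpl; nra|].
    intros h x a0 a1 a2 Hh Hx.
    destruct (HPm h x a0 a1 a2 Hh Hx) as [c2 Hxm].
    eapply expands_weaken with (K' := Kx) in Hx; [|unfold Kx; lra].
    eapply expands_weaken with (K' := Kx) in Hxm; [|unfold Kx; lra].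
    pose proof (expands_mul Kx h _ _ _ _ _ _ _ _ ltac:(unfold Kx; lra) Hh Hx Hxm) as Hmul.
    eexists. simpl pow. eapply expands_coeffs; [reflexivity| |reflexivity|exact Hmul].
    rewrite S_INR. destruct m as [|m]; simpl; [ring|]. rewrite Nat.sub_0_r. ring.
Qed.

Lemma f_expansion (f : R -> R -> R) (Chat Chat_rho : R -> R) (m : nat) :
  smooth1 Chat -> (forall y, derivable_pt_lim Chat y (Chat_rho y)) ->
  (forall M, 0 < M -> exists c e, 0 < e /\ forall x y, Rabs ((x + y) / 2) <= M ->
     Rabs ((x - y) / 2) < e ->
     Rabs (f x y - Chat ((x + y) / 2) * ((x - y) / 2) ^ m) <= c * Rabs ((x - y) / 2) ^ (m + 2)) ->
  forall K, 1 <= K -> exists C h1, 0 < h1 /\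
  forall h x y g0 a b y1 c2, 0 < h < h1 ->
    expands K h ((x - y) / 2) 0 a b -> expands K h ((x + y) / 2) g0 y1 c2 ->
    Rabs (f x y - (h ^ m * (Chat g0 * a ^ m)
                   + h ^ (m + 1) * (Chat_rho g0 * y1 * a ^ m + INR m * Chat g0 * a ^ (m - 1) * b)))
      <= C * h ^ (m + 2).
Proof.
  intros HC HCd Hfexp K HK.
  destruct (Hfexp (3 * K + 1)) as [c [e0 [He0 Hf]]]; [lra|].
  destruct (coefficient_estimates Chat Chat_rho HC HCd K) as [BC [HBC HCf]].
  destruct (expands_pow m (3 * K) ltac:(lra)) as [Kp [HKp HPow]].
  set (h1 := Rmin (Rmin 1 (e0 / (3 * K))) (1 / (3 * K))).
  assert (Hh1 : 0 < h1) by (unfold h1; repeat apply Rmin_glb_lt; try apply Rdiv_lt_0_compat; lra).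
  eexists. exists h1. split; [exact Hh1|].
  intros h x y g0 a b y1 c2 Hh Hdiff Hmean.
  destruct (below_min_div h _ 1 (3 * K) ltac:(lra) (proj2 Hh)) as [Hh' Hh_1].
  destruct (below_min_div h 1 e0 (3 * K) ltac:(lra) Hh') as [Hh_le1 Hh_e].
  assert (Hhabs : Rabs h <= 1) by (rewrite Rabs_pos_eq; lra).
  destruct Hdiff as (_ & Ha & Hb & E & HE & Ediff).
  destruct Hmean as (Hg0 & Hy1 & Hc2 & E2 & HE2 & Emean).
  set (A := a + h * b + h ^ 2 * E).
  assert (HA : expands (3 * K) h A a b E).
  { repeat split; try lra. exists 0. split; [rewrite Rabs_R0; lra|unfold A; ring]. }
  destruct (HPow h A a b E Hhabs HA) as [c2' (_ & _ & Hc2' & E' & HE' & EAm)].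
  set (P := c2' + h * E').
  set (Q := c2 + h * E2).
  set (s := h * (y1 + h * Q)).
  assert (Hs : Rabs s <= h * (3 * K)).
  { unfold s, Q. rewrite Rabs_mult, (Rabs_pos_eq h) by lra. apply Rmult_le_compat_l; [lra|].
    eapply Rle_trans; [bound_tac|]. nra. }
  assert (Hmean' : (x + y) / 2 = g0 + s) by (rewrite Emean; unfold s, Q; ring).
  assert (HA3 : Rabs A <= 3 * K) by (unfold A; eapply Rle_trans; [bound_tac|]; simpl; nra).
  assert (Hdiff' : (x - y) / 2 = h * A) by (rewrite Ediff; unfold A; ring).
  destruct (HCf g0 s Hg0 ltac:(lra)) as [HCh [HChr HR2]].
  set (R2 := Chat (g0 + s) - Chat g0 - s * Chat_rho g0) in HR2.
  set (S := R2 / h ^ 2).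
  assert (Hh2 : 0 < h ^ 2) by (apply pow_lt; lra).
  assert (HS : Rabs S <= BC * (3 * K) ^ 2).
  { unfold S, Rdiv. rewrite Rabs_mult, Rabs_inv, (Rabs_pos_eq (h ^ 2)) by lra.
    apply (Rmult_le_reg_r (h ^ 2)); [lra|]. rewrite Rmult_assoc, Rinv_l, Rmult_1_r by lra.
    eapply Rle_trans; [exact HR2|]. rewrite Rmult_assoc, <- Rpow_mult_distr.
    apply Rmult_le_compat_l; [lra|]. apply pow_incr. split; [apply Rabs_pos|].
    rewrite Rmult_comm. exact Hs. }
  assert (HR1 : Rabs (f x y - Chat ((x + y) / 2) * ((x - y) / 2) ^ m)
                <= Rabs c * (3 * K) ^ (m + 2) * h ^ (m + 2)).
  { eapply Rle_trans; [apply Hf|].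
    - rewrite Hmean'. eapply Rle_trans; [apply Rabs_triang|]. lra.
    - rewrite Hdiff', Rabs_mult, (Rabs_pos_eq h) by lra. nra.
    - rewrite Hdiff', Rabs_mult, (Rabs_pos_eq h), Rpow_mult_distr by lra.
      assert (HAm : Rabs A ^ (m + 2) <= (3 * K) ^ (m + 2))
        by (apply pow_incr; split; [apply Rabs_pos|exact HA3]).
      pose proof (pow_le (Rabs A) (m + 2) (Rabs_pos A)).
      pose proof (pow_le h (m + 2) ltac:(lra)). pose proof (Rle_abs c). pose proof (Rabs_pos c).
      assert (0 <= h ^ (m + 2) * Rabs A ^ (m + 2)) by (apply Rmult_le_pos; lra).
      assert (h ^ (m + 2) * Rabs A ^ (m + 2) <= h ^ (m + 2) * (3 * K) ^ (m + 2))
        by (apply Rmult_le_compat_l; lra).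
      nra. }
  set (N := INR m * a ^ (m - 1) * b).
  assert (Eq : f x y - (h ^ m * (Chat g0 * a ^ m) + h ^ (m + 1) * (Chat_rho g0 * y1 * a ^ m + Chat g0 * N))
     = (f x y - Chat ((x + y) / 2) * ((x - y) / 2) ^ m)
       + h ^ (m + 2) * (Chat g0 * P + Chat_rho g0 * Q * a ^ m
           + Chat_rho g0 * (y1 + h * Q) * (N + h * P) + S * (a ^ m + h * N + h ^ 2 * P))).
  { rewrite Hmean', Hdiff', Rpow_mult_distr, EAm.
    replace (Chat (g0 + s)) with (Chat g0 + s * Chat_rho g0 + h ^ 2 * S)
      by (unfold S, R2; field; lra).
    unfold P, s, N. rewrite !pow_add. ring. }
  replace (Chat_rho g0 * y1 * a ^ m + INR m * Chat g0 * a ^ (m - 1) * b)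
    with (Chat_rho g0 * y1 * a ^ m + Chat g0 * N) by (unfold N; ring).
  rewrite Eq.
  assert (HP : Rabs P <= Kp + 1 * Kp) by (unfold P; bound_tac).
  assert (HQ : Rabs Q <= K + 1 * K) by (unfold Q; bound_tac).
  eassert (Hbr : Rabs (Chat g0 * P + Chat_rho g0 * Q * a ^ m
           + Chat_rho g0 * (y1 + h * Q) * (N + h * P) + S * (a ^ m + h * N + h ^ 2 * P)) <= ?[Bbr])
    by (unfold N; bound_tac).
  assert (Hpos : 0 < h ^ (m + 2)) by (apply pow_lt; lra).
  eapply Rle_trans; [apply Rabs_triang|]. rewrite Rabs_mult, (Rabs_pos_eq (h ^ (m + 2))) by lra.
  eapply Rle_trans; [apply Rplus_le_compat; [exact HR1|apply Rmult_le_compat_l; [lra|exact Hbr]]|].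
  apply factor_le.
Qed.

Lemma ratio_expands (b kappa h : R) (w : nat) :
  0 < b < 1 -> Rabs (kappa * h) <= 1 -> is_digit w ->
  expands (1 + Rabs kappa + kappa ^ 2 + Rabs kappa ^ 3) h (ratio b (kappa * h) w)
    1 (- kappa * IwR w) (kappa * kappa * IwR w * IwR w / 2).
Proof.
  intros Hb Hk Hw. apply Rabs_le_between in Hk.
  pose proof (Rabs_pos kappa). pose proof (pow2_ge_0 kappa).
  pose proof (pow_le (Rabs kappa) 3 (Rabs_pos kappa)).
  assert (Hcoef : forall c, Rabs c <= 1 -> Rabs (- kappa * c) <= Rabs kappa /\
            Rabs (kappa * kappa * c * c / 2) <= kappa ^ 2).
  { intros c Hc. split.
    - rewrite Rabs_mult, Rabs_Ropp. pose proof (Rabs_pos c). nra.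
    - replace (kappa * kappa * c * c / 2) with (kappa ^ 2 * (c * c) / 2) by field.
      unfold Rdiv. rewrite !Rabs_mult, (Rabs_pos_eq (kappa ^ 2)) by lra.
      rewrite Rabs_inv, (Rabs_pos_eq 2) by lra. pose proof (Rabs_pos c).
      assert (Rabs c * Rabs c <= 1) by nra. nra. }
  destruct (Hcoef (IwR w) (IwR_digit w Hw)) as [Hc1 Hc2].
  repeat split; [rewrite Rabs_R1; lra|lra|lra|].
  assert (Hrem : forall s, s = 1 \/ s = -1 -> Rabs (kappa ^ 3 / (4 * (1 + s * kappa * h / 2)))
                   <= Rabs kappa ^ 3).
  { intros s Hs. unfold Rdiv. rewrite Rabs_mult, Rabs_inv, <- RPow_abs.
    rewrite (Rabs_pos_eq (4 * _)) by (destruct Hs as [-> | ->]; lra).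
    apply Rle_trans with (Rabs kappa ^ 3 * 1); [|lra]. apply Rmult_le_compat_l; [lra|].
    rewrite <- Rinv_1. apply Rinv_le_contravar; destruct Hs as [-> | ->]; lra. }
  destruct Hw as [-> | [-> | ->]]; unfold ratio, nu, IwR, Iw; cbn [eta Nat.sub Z.of_nat].
  - exists (- (kappa ^ 3 / (4 * (1 + 1 * kappa * h / 2)))). split.
    + rewrite Rabs_Ropp. eapply Rle_trans; [apply Hrem; auto|lra].
    + simpl. field. lra.
  - exists 0. split; [rewrite Rabs_R0; lra|]. simpl. field. lra.
  - exists (kappa ^ 3 / (4 * (1 + -1 * kappa * h / 2))). split.
    + eapply Rle_trans; [apply Hrem; auto|lra].
    + simpl. field. lra.
Qed.

Lemma ratio_prod_expands (kappa : R) (n : nat) : exists K, 1 <= K /\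
  forall b h wp, 0 < b < 1 -> 0 < h <= 1 -> Rabs (kappa * h) <= 1 ->
    length wp = n -> Forall is_digit wp ->
    exists c2, expands K h (ratio_prod b (kappa * h) wp) 1 (- kappa * shiftR wp) c2.
Proof.
  set (Kr := 1 + Rabs kappa + kappa ^ 2 + Rabs kappa ^ 3).
  assert (HKr : 1 <= Kr) by (unfold Kr; pose proof (Rabs_pos kappa); pose proof (pow2_ge_0 kappa);
                             pose proof (pow_le (Rabs kappa) 3 (Rabs_pos kappa)); lra).
  induction n as [|n IH].
  - exists 1. split; [lra|]. intros b h wp _ _ _ Hl _. destruct wp; [|discriminate].
    exists 0. unfold ratio_prod, shiftR, shiftZ; simpl.
    repeat split; rewrite ?Rabs_R1, ?Rmult_0_r, ?Ropp_0, ?Rabs_R0; try lra.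
    exists 0. split; [rewrite Rabs_R0; lra|ring].
  - destruct IH as [Kn [HKn HPn]].
    set (Kx := Kr + Kn).
    exists (10 * Kx ^ 2). split; [unfold Kx; simpl; nra|].
    intros b h wp Hb Hh Hk Hl HF.
    destruct wp as [|x wp]; [discriminate|]. injection Hl as Hl.
    destruct (HPn b h wp Hb Hh Hk Hl (Forall_inv_tail HF)) as [c2 Hwp].
    pose proof (ratio_expands b kappa h x Hb Hk (Forall_inv HF)) as Hx. fold Kr in Hx.
    eapply expands_weaken with (K' := Kx) in Hx; [|unfold Kx; lra].
    eapply expands_weaken with (K' := Kx) in Hwp; [|unfold Kx; lra].
    assert (Hh1 : Rabs h <= 1) by (rewrite Rabs_pos_eq; lra).
    pose proof (expands_mul Kx h _ _ _ _ _ _ _ _ ltac:(unfold Kx; lra) Hh1 Hx Hwp) as Hmul.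
    eexists. eapply expands_coeffs; [| |reflexivity|exact Hmul]; [ring|].
    rewrite shiftR_cons. ring.
Qed.

Lemma div_bound (x p B : R) : 0 < p -> Rabs x <= B * p -> Rabs (x / p) <= B.
Proof.
  intros Hp Hx. unfold Rdiv. rewrite Rabs_mult, Rabs_inv, (Rabs_pos_eq p) by lra.
  apply (Rmult_le_reg_r p); [lra|]. rewrite Rmult_assoc, Rinv_l, Rmult_1_r by lra. exact Hx.
Qed.

Lemma displaced_value_expands (V y0 y1 y2 g0 g1 g2 z h L Z : R) :
  0 < h <= 1 -> 0 <= L -> Rabs z <= Z ->
  Rabs g0 <= L -> Rabs g1 <= L -> Rabs g2 <= L ->
  Rabs (y0 - g0) <= L * h ^ 2 -> Rabs (y1 - g1) <= L * h ^ 2 -> Rabs (y2 - g2) <= L * h ^ 2 ->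
  Rabs (V - y0 - z * h * y1 - z * h * (z * h) / 2 * y2) <= L * Rabs (z * h) ^ 3 ->
  expands (L * (1 + Z) ^ 3) h V g0 (z * g1) (z * z / 2 * g2 + (y0 - g0) / h ^ 2).
Proof.
  intros Hh HL Hz Hg0 Hg1 Hg2 H0 H1 H2 HV.
  assert (HZ : 0 <= Z) by (pose proof (Rabs_pos z); lra).
  assert (Hh2 : 0 < h ^ 2) by (apply pow_lt; lra).
  assert (Hh3 : 0 < h ^ 3) by (apply pow_lt; lra).
  assert (HD0 : Rabs ((y0 - g0) / h ^ 2) <= L) by (apply div_bound; auto).
  assert (HD1 : Rabs ((y1 - g1) / h ^ 2) <= L) by (apply div_bound; auto).
  assert (HD2 : Rabs ((y2 - g2) / h ^ 2) <= L) by (apply div_bound; auto).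
  set (EA := (V - y0 - z * h * y1 - z * h * (z * h) / 2 * y2) / h ^ 3).
  assert (HEA : Rabs EA <= L * Z ^ 3).
  { apply div_bound; auto. eapply Rle_trans; [exact HV|].
    rewrite Rabs_mult, (Rabs_pos_eq h), Rpow_mult_distr, <- Rmult_assoc by lra.
    apply Rmult_le_compat_r; [lra|]. apply Rmult_le_compat_l; [lra|].
    apply pow_incr. split; [apply Rabs_pos|auto]. }
  assert (Hcube : (1 + Z) ^ 3 = 1 + 3 * Z + 3 * Z ^ 2 + Z ^ 3) by ring.
  assert (HZ2 : 0 <= Z ^ 2) by (apply pow_le; lra).
  assert (HZ3 : 0 <= Z ^ 3) by (apply pow_le; lra).
  assert (HLZ : forall e B, Rabs e <= L * B -> B <= (1 + Z) ^ 3 -> Rabs e <= L * (1 + Z) ^ 3).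
  { intros e B He HB. eapply Rle_trans; [exact He|]. apply Rmult_le_compat_l; lra. }
  assert (Hhalf : Rabs (/ 2) <= / 2) by (rewrite Rabs_pos_eq; lra).
  assert (Hh1 : Rabs h <= 1) by (rewrite Rabs_pos_eq; lra).
  repeat split.
  - apply (HLZ _ 1); lra.
  - apply (HLZ _ Z); [|lra]. rewrite Rabs_mult.
    pose proof (Rabs_pos z). pose proof (Rabs_pos g1). nra.
  - apply (HLZ _ (Z * Z / 2 + 1)); [|nra].
    eapply Rle_trans; [bound_tac|]. nra.
  - exists (z * ((y1 - g1) / h ^ 2) + h * (z * z / 2 * ((y2 - g2) / h ^ 2)) + EA). split.
    + apply (HLZ _ (Z + Z * Z / 2 + Z ^ 3)); [|nra].
      eapply Rle_trans; [bound_tac|]. nra.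
    + unfold EA. field. lra.
Qed.

Section DisplacedDensity.
Variables (rho rho_r rho_rr : R -> R -> R) (Br R1 T1 : R).
Hypothesis HBr : 0 <= Br.
Hypothesis Hval : forall x t, Rabs x <= R1 -> Rabs t <= T1 ->
  Rabs (rho x t) <= Br /\ Rabs (rho_r x t) <= Br /\ Rabs (rho_rr x t) <= Br.
Hypothesis Htaylor : forall x t s, Rabs x <= R1 -> Rabs t <= T1 -> Rabs s <= 1 ->
  Rabs (rho (x + s) t - rho x t - s * rho_r x t - s * s / 2 * rho_rr x t) <= Br * Rabs s ^ 3.
Hypothesis Htime : forall x t s, Rabs x <= R1 -> Rabs t <= T1 -> Rabs s <= 1 ->
  Rabs (rho x (t + s) - rho x t) <= Br * Rabs s /\
  Rabs (rho_r x (t + s) - rho_r x t) <= Br * Rabs s /\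
  Rabs (rho_rr x (t + s) - rho_rr x t) <= Br * Rabs s.

Lemma displaced_density_expands (r t dt z h c Z : R) :
  0 < h <= 1 -> 0 <= c -> Rabs z <= Z -> Rabs (z * h) <= 1 ->
  Rabs r <= R1 -> Rabs t <= T1 -> Rabs (t + dt) <= T1 -> Rabs dt <= c * h ^ 2 -> Rabs dt <= 1 ->
  expands (Br * (1 + c) * (1 + Z) ^ 3) h (rho (r + z * h) (t + dt))
    (rho r t) (z * rho_r r t) (z * z / 2 * rho_rr r t + (rho r (t + dt) - rho r t) / h ^ 2).
Proof.
  intros Hh Hc Hz Hzh Hr Ht Htdt Hdt Hdt1.
  assert (HL : Br <= Br * (1 + c)) by nra.
  assert (Hshift : forall e, Rabs e <= Br * Rabs dt -> Rabs e <= Br * (1 + c) * h ^ 2).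
  { intros e He. eapply Rle_trans; [exact He|].
    assert (0 <= h ^ 2) by (apply pow_le; lra). nra. }
  destruct (Hval r t Hr Ht) as (Hg0 & Hg1 & Hg2).
  destruct (Htime r t dt Hr Ht Hdt1) as (H0 & H1 & H2).
  apply displaced_value_expands with (y1 := rho_r r (t + dt)) (y2 := rho_rr r (t + dt));
    try lra; auto.
  - eapply Rle_trans; [apply Htaylor; auto|].
    apply Rmult_le_compat_r; [apply pow_le, Rabs_pos|lra].
Qed.

End DisplacedDensity.

(* Coefficients of the small-step expansion of the two arguments x, y of f in
   F(omega, omega_k), for leading digits with displacements Iw (for x) and I0
   (for y), trailing displacement sg and spatial offset u of x:
   (x - y)/2 = h a_coef + h^2 b_coef + O(h^3),  (x + y)/2 = g0 + h y_coef + O(h^2). *)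
Definition a_coef (kappa Iw I0 g0 g1 : R) : R := -(Iw * (kappa * g0) + I0 * (- kappa * g0 + g1)) / 2.
Definition b_coef (kappa Iw I0 sg u g0 g1 g2 : R) : R :=
  - kappa * sg * a_coef kappa Iw I0 g0 g1
  + (kappa * kappa * (Iw * Iw - I0 * I0) / 2 * g0 - u * kappa * (Iw - I0) * g1
     + kappa * I0 * I0 * g1 - g2 * (u * I0 + I0 * I0 / 2)) / 2.
Definition y_coef (kappa Iw I0 sg u g0 g1 : R) : R :=
  - kappa * sg * g0 - kappa * (Iw + I0) * g0 / 2 + (2 * u + I0) * g1 / 2.

Lemma arguments_expand (K h kappa Iw I0 sg u g0 g1 g2 Ec D0 qw q0 c VA VB : R) :
  0 <= K -> Rabs h <= 1 ->
  expands K h qw 1 (- kappa * Iw) (kappa * kappa * Iw * Iw / 2) ->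
  expands K h q0 1 (- kappa * I0) (kappa * kappa * I0 * I0 / 2) ->
  expands K h c 1 (- kappa * sg) Ec ->
  expands K h VA g0 (u * g1) (u * u / 2 * g2 + D0) ->
  expands K h VB g0 ((u + I0) * g1) ((u + I0) * (u + I0) / 2 * g2 + D0) ->
  expands (10 * (10 * K ^ 2) ^ 2) h ((qw * (c * VA) - q0 * (c * VB)) / 2)
    0 (a_coef kappa Iw I0 g0 g1) (b_coef kappa Iw I0 sg u g0 g1 g2) /\
  exists c2, expands (10 * (10 * K ^ 2) ^ 2) h ((qw * (c * VA) + q0 * (c * VB)) / 2)
    g0 (y_coef kappa Iw I0 sg u g0 g1) c2.
Proof.
  intros HK Hh Hqw Hq0 Hc HA HB.
  assert (HK1 : 1 <= K) by (destruct Hqw as (H0 & _); rewrite Rabs_R1 in H0; exact H0).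
  set (K2 := 10 * K ^ 2).
  assert (HKK2 : K <= K2) by (unfold K2; simpl; nra).
  assert (Hprod : forall q a1 a2 V b0 b1 b2, expands K h q 1 a1 a2 -> expands K h V b0 b1 b2 ->
            expands (10 * K2 ^ 2) h (q * (c * V)) (1 * (1 * b0))
              (1 * (1 * b1 + - kappa * sg * b0) + a1 * (1 * b0))
              (1 * (1 * b2 + - kappa * sg * b1 + Ec * b0) + a1 * (1 * b1 + - kappa * sg * b0)
               + a2 * (1 * b0))).
  { intros q a1 a2 V b0 b1 b2 Hq HV.
    pose proof (expands_mul K h c V _ _ _ _ _ _ HK Hh Hc HV) as HcV. fold K2 in HcV.
    apply expands_mul; [unfold K2; apply Rmult_le_pos, pow_le; lra|exact Hh| |exact HcV].
    eapply expands_weaken; [exact HKK2|exact Hq]. }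
  pose proof (Hprod _ _ _ _ _ _ _ Hqw HA) as HX.
  pose proof (Hprod _ _ _ _ _ _ _ Hq0 HB) as HY.
  split.
  - replace ((qw * (c * VA) - q0 * (c * VB)) / 2)
      with (/ 2 * (qw * (c * VA)) + - / 2 * (q0 * (c * VB))) by field.
    eapply expands_coeffs; [| | |apply expands_comb; [|exact HX|exact HY]].
    + field.
    + unfold a_coef. field.
    + unfold b_coef, a_coef. field.
    + rewrite Rabs_Ropp, Rabs_pos_eq by lra. lra.
  - eexists.
    replace ((qw * (c * VA) + q0 * (c * VB)) / 2)
      with (/ 2 * (qw * (c * VA)) + / 2 * (q0 * (c * VB))) by field.
    eapply expands_coeffs; [| |reflexivity|apply expands_comb; [|exact HX|exact HY]].
    + field.
    + unfold y_coef. field.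
    + rewrite Rabs_pos_eq by lra. lra.
Qed.

(* The h^(m+1) coefficient of f along a cell: it is affine in the trailing
   displacement sg, with constant part [order1_coef] and slope [shift_coef]. *)
Definition order1_coef (kappa Iw I0 s g0 g1 g2 Ch Chr : R) (m : nat) : R :=
  Chr * y_coef kappa Iw I0 0 s g0 g1 * a_coef kappa Iw I0 g0 g1 ^ m
  + INR m * Ch * a_coef kappa Iw I0 g0 g1 ^ (m - 1) * b_coef kappa Iw I0 0 s g0 g1 g2.
Definition shift_coef (kappa Iw I0 g0 g1 g2 Ch Chr : R) (m : nat) : R :=
  Chr * (- kappa * g0 + g1) * a_coef kappa Iw I0 g0 g1 ^ m
  + INR m * Ch * a_coef kappa Iw I0 g0 g1 ^ (m - 1) *
    (- kappa * a_coef kappa Iw I0 g0 g1 + (- kappa * (Iw - I0) * g1 - g2 * I0) / 2).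

Lemma order1_affine kappa Iw I0 s sg g0 g1 g2 Ch Chr m :
  Chr * y_coef kappa Iw I0 sg (s + sg) g0 g1 * a_coef kappa Iw I0 g0 g1 ^ m
  + INR m * Ch * a_coef kappa Iw I0 g0 g1 ^ (m - 1) * b_coef kappa Iw I0 sg (s + sg) g0 g1 g2
  = order1_coef kappa Iw I0 s g0 g1 g2 Ch Chr m + sg * shift_coef kappa Iw I0 g0 g1 g2 Ch Chr m.
Proof. unfold order1_coef, shift_coef, y_coef, b_coef. field. Qed.

Lemma small_step (D kappa b h : R) (k1 : nat) :
  0 < D -> 0 < b < 1 -> 0 < h ->
  h * (1 + Rabs kappa + (INR k1 + 2) + (INR k1 + 1) / (2 * D)) < 1 ->
  h <= 1 /\ Rabs (kappa * h) <= 1 /\ (INR k1 + 2) * h <= 1 /\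
  Rabs ((INR k1 + 1) * tau_of D b h) <= (INR k1 + 1) / (2 * D) * h ^ 2 /\
  (INR k1 + 1) / (2 * D) * h ^ 2 <= 1.
Proof.
  intros HD Hb Hh Hsmall.
  pose proof (Rabs_pos kappa). pose proof (pos_INR k1).
  assert (Hc : 0 <= (INR k1 + 1) / (2 * D)) by (apply Rmult_le_pos; [lra|apply Rlt_le, Rinv_0_lt_compat; lra]).
  assert (Hh1 : h <= 1) by nra.
  assert (Hk : Rabs (kappa * h) <= 1) by (rewrite Rabs_mult, (Rabs_pos_eq h) by lra; nra).
  assert (Hz : (INR k1 + 2) * h <= 1) by nra.
  assert (Hlag : (INR k1 + 1) / (2 * D) * h ^ 2 <= 1).
  { assert (h * ((INR k1 + 1) / (2 * D)) <= 1) by nra. simpl. nra. }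
  assert (Htau : Rabs ((INR k1 + 1) * tau_of D b h) <= (INR k1 + 1) / (2 * D) * h ^ 2).
  { unfold tau_of.
    replace ((INR k1 + 1) * (b * h ^ 2 / (2 * D))) with (b * ((INR k1 + 1) / (2 * D) * h ^ 2))
      by (field; lra).
    assert (0 <= (INR k1 + 1) / (2 * D) * h ^ 2) by (apply Rmult_le_pos; [lra|apply pow_le; lra]).
    rewrite Rabs_pos_eq by nra. nra. }
  repeat split; assumption.
Qed.

Lemma Ffun_cell_arguments (b P h tau : R) (f : R -> R -> R) (rho : R -> R -> R) (k1 : nat)
    (l n s : Z) (w w0 : nat) (wp : list nat) :
  length wp = k1 ->
  Ffun b P f (fun n' l' => rho (IZR n' * h) (IZR l' * tau)) l (n + s) w (w0 :: wp) =
  f (ratio b P w * (ratio_prod b P wp *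
       rho (IZR n * h + (IZR s + shiftR wp) * h) (IZR l * tau + - ((INR k1 + 1) * tau))))
    (ratio b P w0 * (ratio_prod b P wp *
       rho (IZR n * h + (IZR s + shiftR wp + IwR w0) * h) (IZR l * tau + - ((INR k1 + 1) * tau)))).
Proof.
  intros Hlen. unfold Ffun. fold (ratio b P w) (ratio b P w0).
  rewrite !celldens_closed, Hlen. unfold shiftR, IwR.
  rewrite !plus_IZR, !minus_IZR, <- INR_IZR_INZ.
  f_equal; f_equal; f_equal; f_equal; ring.
Qed.

Lemma sumlt_ext N f g : (forall p, (p < N)%nat -> f p = g p) -> sumlt N f = sumlt N g.
Proof. induction N; intros H; simpl; auto. rewrite IHN by (intros; apply H; lia). rewrite H by lia. auto. Qed.
Lemma sumlt_plus N f g : sumlt N (fun p => f p + g p) = sumlt N f + sumlt N g.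
Proof. induction N; simpl; [ring|]. rewrite IHN; ring. Qed.
Lemma sumlt_scal N c f : sumlt N (fun p => c * f p) = c * sumlt N f.
Proof. induction N; simpl; [ring|]. rewrite IHN; ring. Qed.
Lemma sumlt_sum_f_R0 N g : sum_f_R0 g N = sumlt (S N) g.
Proof. induction N; simpl; [ring|]. rewrite IHN. simpl. ring. Qed.
Lemma sumlt_S n g : sumlt (S n) g = sumlt n g + g n.
Proof. reflexivity. Qed.
Lemma sumlt_pairs N g : sumlt (2 * N) g = sumlt N (fun p => g (2 * p)%nat + g (2 * p + 1)%nat).
Proof.
  induction N; [reflexivity|]. replace (2 * S N)%nat with (S (S (2 * N))) by lia.
  rewrite !sumlt_S, IHN. replace (S (2 * N)) with (2 * N + 1)%nat by lia. ring.
Qed.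

(* Weights that are b except at one end of the range (as S_nu is, see below). *)
Lemma sumlt_first_special N g b : sumlt (S N) (fun p => g p * (b + (if Nat.eqb p 0 then 1 - b else 0))) =
  b * sumlt (S N) g + (1 - b) * g 0%nat.
Proof. induction N; simpl; [ring|]. simpl in IHN. rewrite IHN. ring. Qed.
Lemma sumlt_last_special N g b : sumlt (S N) (fun p => g p * (b + (if Nat.eqb p N then 1 - b else 0))) =
  b * sumlt (S N) g + (1 - b) * g N.
Proof.
  simpl. rewrite Nat.eqb_refl, (sumlt_ext N _ (fun p => b * g p)).
  - rewrite sumlt_scal. ring.
  - intros p Hp. destruct (Nat.eqb_spec p N); [lia|ring].
Qed.

Lemma binom_n_0 n : Binomial.C n 0 = 1.
Proof. unfold Binomial.C. simpl. rewrite Nat.sub_0_r. field. apply INR_fact_neq_0. Qed.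
Lemma binom_n_n n : Binomial.C n n = 1.
Proof. unfold Binomial.C. rewrite Nat.sub_diag. simpl. field. apply INR_fact_neq_0. Qed.

Lemma binom_odd (A B : R) (m' : nat) :
  sumlt (S m') (fun p => Binomial.C (2 * m' + 1) (2 * p) * A ^ (2 * p) * B ^ (2 * (m' - p) + 1)) =
    ((B + A) ^ (2 * m' + 1) + (B - A) ^ (2 * m' + 1)) / 2 /\
  sumlt (S m') (fun p => Binomial.C (2 * m' + 1) (2 * p + 1) * A ^ (2 * p + 1) * B ^ (2 * (m' - p))) =
    ((B + A) ^ (2 * m' + 1) - (B - A) ^ (2 * m' + 1)) / 2.
Proof.
  assert (Hp : forall x : R, (B + x) ^ (2 * m' + 1) = sumlt (S m') (fun p =>
     Binomial.C (2 * m' + 1) (2 * p) * x ^ (2 * p) * B ^ (2 * (m' - p) + 1) +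
     Binomial.C (2 * m' + 1) (2 * p + 1) * x ^ (2 * p + 1) * B ^ (2 * (m' - p)))).
  { intros x. rewrite Rplus_comm, binomial, sumlt_sum_f_R0.
    replace (S (2 * m' + 1)) with (2 * S m')%nat by lia. rewrite sumlt_pairs.
    apply sumlt_ext. intros p Hp. f_equal; f_equal; f_equal; lia. }
  pose proof (Hp A) as H1. pose proof (Hp (-A)) as H2.
  replace (B + - A) with (B - A) in H2 by ring.
  rewrite H1, H2.
  rewrite (sumlt_ext (S m') (fun p => Binomial.C (2 * m' + 1) (2 * p) * (- A) ^ (2 * p) * B ^ (2 * (m' - p) + 1) +
     Binomial.C (2 * m' + 1) (2 * p + 1) * (- A) ^ (2 * p + 1) * B ^ (2 * (m' - p)))
     (fun p => Binomial.C (2 * m' + 1) (2 * p) * A ^ (2 * p) * B ^ (2 * (m' - p) + 1) +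
     (-1) * (Binomial.C (2 * m' + 1) (2 * p + 1) * A ^ (2 * p + 1) * B ^ (2 * (m' - p))))).
  2: { intros p _. rewrite !pow_add, !pow_mult. replace ((- A) ^ 2) with (A ^ 2) by ring. ring. }
  rewrite !sumlt_plus, sumlt_scal. split; field.
Qed.

Lemma binom_even (A B : R) (m' : nat) :
  sumlt (S m') (fun p => Binomial.C (2 * m') (2 * p) * A ^ (2 * p) * B ^ (2 * (m' - p))) =
    ((B + A) ^ (2 * m') + (B - A) ^ (2 * m')) / 2 /\
  sumlt m' (fun p => Binomial.C (2 * m') (2 * p + 1) * A ^ (2 * p + 1) * B ^ (2 * (m' - p) - 1)) =
    ((B + A) ^ (2 * m') - (B - A) ^ (2 * m')) / 2.
Proof.
  assert (Hp : forall x : R, (B + x) ^ (2 * m') = sumlt m' (fun p =>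
     Binomial.C (2 * m') (2 * p) * x ^ (2 * p) * B ^ (2 * (m' - p)) +
     Binomial.C (2 * m') (2 * p + 1) * x ^ (2 * p + 1) * B ^ (2 * (m' - p) - 1)) + x ^ (2 * m')).
  { intros x. rewrite Rplus_comm, binomial, sumlt_sum_f_R0, sumlt_S, sumlt_pairs.
    rewrite Nat.sub_diag, binom_n_n. f_equal; [|simpl; ring].
    apply sumlt_ext. intros p Hp. f_equal; f_equal; f_equal; lia. }
  pose proof (Hp A) as H1. pose proof (Hp (-A)) as H2.
  replace (B + - A) with (B - A) in H2 by ring.
  rewrite H1, H2.
  rewrite (sumlt_ext m' (fun p => Binomial.C (2 * m') (2 * p) * (- A) ^ (2 * p) * B ^ (2 * (m' - p)) +
     Binomial.C (2 * m') (2 * p + 1) * (- A) ^ (2 * p + 1) * B ^ (2 * (m' - p) - 1))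
     (fun p => Binomial.C (2 * m') (2 * p) * A ^ (2 * p) * B ^ (2 * (m' - p)) +
     (-1) * (Binomial.C (2 * m') (2 * p + 1) * A ^ (2 * p + 1) * B ^ (2 * (m' - p) - 1)))).
  2: { intros p _. rewrite !pow_add, !pow_mult. replace ((- A) ^ 2) with (A ^ 2) by ring. ring. }
  replace ((- A) ^ (2 * m')) with (A ^ (2 * m')) by (rewrite !pow_mult; f_equal; ring).
  rewrite !sumlt_plus, sumlt_scal, (sumlt_S m'). replace (2 * (m' - m'))%nat with 0%nat by lia.
  rewrite binom_n_n. split; field.
Qed.

Lemma Snu_even b P p : Snu b P (2 * p) = b + (if Nat.eqb p 0 then 1 - b else 0).
Proof.
  unfold Snu. destruct p; [simpl; ring|].
  replace (Nat.eqb (2 * S p) 0) with false by (symmetry; apply Nat.eqb_neq; lia).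
  rewrite Nat.odd_even. simpl. ring.
Qed.

Section SnuSums.
Variables (A B b P : R) (m' : nat).
Let Em := ((B + A) ^ (2 * m' + 1) + (B - A) ^ (2 * m' + 1)) / 2.
Let Om := ((B + A) ^ (2 * m' + 1) - (B - A) ^ (2 * m' + 1)) / 2.
Let E2 := ((B + A) ^ (2 * m') + (B - A) ^ (2 * m')) / 2.
Let O2 := ((B + A) ^ (2 * m') - (B - A) ^ (2 * m')) / 2.

Lemma Snu_sum_even_odd : sumlt (S m') (fun p => Binomial.C (2 * m' + 1) (2 * p) * A ^ (2 * p)
    * B ^ (2 * (m' - p) + 1) * Snu b P (2 * p)) = B ^ (2 * m' + 1) + b * (Em - B ^ (2 * m' + 1)).
Proof.
  rewrite (sumlt_ext _ _ (fun p => (Binomial.C (2 * m' + 1) (2 * p) * A ^ (2 * p) * B ^ (2 * (m' - p) + 1)) *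
     (b + (if Nat.eqb p 0 then 1 - b else 0)))) by (intros; rewrite Snu_even; auto).
  rewrite sumlt_first_special, (proj1 (binom_odd A B m')). fold Em.
  rewrite binom_n_0. replace (2 * (m' - 0) + 1)%nat with (2 * m' + 1)%nat by lia. simpl. ring.
Qed.

Lemma Snu_sum_odd_odd : sumlt (S m') (fun p => Binomial.C (2 * m' + 1) (2 * p + 1) * A ^ (2 * p + 1)
    * B ^ (2 * (m' - p)) * Snu b P (2 * (m' - p))) = A ^ (2 * m' + 1) + b * (Om - A ^ (2 * m' + 1)).
Proof.
  rewrite (sumlt_ext _ _ (fun p => (Binomial.C (2 * m' + 1) (2 * p + 1) * A ^ (2 * p + 1) * B ^ (2 * (m' - p))) *
     (b + (if Nat.eqb p m' then 1 - b else 0)))).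
  2: { intros p Hp. rewrite Snu_even. f_equal. f_equal.
       destruct (Nat.eqb_spec (m' - p) 0); destruct (Nat.eqb_spec p m'); auto; lia. }
  rewrite sumlt_last_special, (proj2 (binom_odd A B m')). fold Om.
  rewrite binom_n_n. replace (2 * (m' - m'))%nat with 0%nat by lia. simpl. ring.
Qed.

Lemma Snu_sum_even_odd_scaled (Y : R) : sumlt (S m') (fun p => Binomial.C (2 * m' + 1) (2 * p) * A ^ (2 * p)
    * B ^ (2 * (m' - p) + 1) * Y * Snu b P (2 * p)) = Y * (B ^ (2 * m' + 1) + b * (Em - B ^ (2 * m' + 1))).
Proof. rewrite <- Snu_sum_even_odd, <- sumlt_scal. apply sumlt_ext. intros; ring. Qed.

Lemma Snu_sum_odd_odd_scaled (Y : R) : sumlt (S m') (fun p => Binomial.C (2 * m' + 1) (2 * p + 1)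
    * A ^ (2 * p + 1) * B ^ (2 * (m' - p)) * Y * Snu b P (2 * (m' - p)))
  = Y * (A ^ (2 * m' + 1) + b * (Om - A ^ (2 * m' + 1))).
Proof. rewrite <- Snu_sum_odd_odd, <- sumlt_scal. apply sumlt_ext. intros; ring. Qed.

Lemma Snu_sum_even_even (X1 X2 X3 X4 eps : R) : sumlt (S m') (fun p => Binomial.C (2 * m') (2 * p)
    * A ^ (2 * p) * B ^ (2 * (m' - p)) *
   (X1 * Snu b P (2 * (m' - p)) + X2 * Snu b P (2 * p)
    - eps * (X3 * Snu b P (2 * (m' - p)) + X4 * Snu b P (2 * p)))) =
  (X1 - eps * X3) * (A ^ (2 * m') + b * (E2 - A ^ (2 * m')))
  + (X2 - eps * X4) * (B ^ (2 * m') + b * (E2 - B ^ (2 * m'))).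
Proof.
  set (g := fun p => Binomial.C (2 * m') (2 * p) * A ^ (2 * p) * B ^ (2 * (m' - p))).
  rewrite (sumlt_ext _ _ (fun p => (X1 - eps * X3) * (g p * (b + (if Nat.eqb p m' then 1 - b else 0))) +
      (X2 - eps * X4) * (g p * (b + (if Nat.eqb p 0 then 1 - b else 0))))).
  2: { intros p Hp. rewrite !Snu_even. unfold g.
       replace (Nat.eqb (m' - p) 0) with (Nat.eqb p m'); [ring|].
       destruct (Nat.eqb_spec (m' - p) 0); destruct (Nat.eqb_spec p m'); auto; lia. }
  rewrite sumlt_plus, !sumlt_scal, sumlt_first_special, sumlt_last_special.
  unfold g. rewrite (proj1 (binom_even A B m')). fold E2.
  rewrite binom_n_0, binom_n_n. replace (2 * (m' - m'))%nat with 0%nat by lia.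
  rewrite Nat.sub_0_r. simpl. ring.
Qed.

Lemma sum_even_odd_scaled (Xc : R) : sumlt m' (fun p => Binomial.C (2 * m') (2 * p + 1)
    * A ^ (2 * p + 1) * B ^ (2 * (m' - p) - 1) * Xc) = Xc * O2.
Proof. unfold O2. rewrite <- (proj2 (binom_even A B m')), <- sumlt_scal. apply sumlt_ext. intros; ring. Qed.
End SnuSums.

Definition Tclosed (D v beta eps delta : R) (m' : nat) (rho rr rrr Ch Chr : R) : R :=
  let m := (2 * m' + 1)%nat in
  let A := v / D * rho in
  let B := - (v / D) * rho + rr in
  let Em := ((B + A) ^ m + (B - A) ^ m) / 2 in
  let Om := ((B + A) ^ m - (B - A) ^ m) / 2 in
  let E2 := ((B + A) ^ (2 * m') + (B - A) ^ (2 * m')) / 2 in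
  let O2 := ((B + A) ^ (2 * m') - (B - A) ^ (2 * m')) / 2 in
  let S1 := B ^ m + beta * (Em - B ^ m) in
  let S2 := A ^ m + beta * (Om - A ^ m) in
  let S3 := A ^ (2 * m') + beta * (E2 - A ^ (2 * m')) in
  let S4 := B ^ (2 * m') + beta * (E2 - B ^ (2 * m')) in
  let Y110 := v / D * rho in
  let Y210 := v / D * rho - 2 * rr in
  let Y101 := v / D * rho - rr in
  let Y201 := v / D * rho - rr in
  let X120 := (v / D) ^ 2 * rho in
  let X220 := (v / D) ^ 2 * rho - 2 * v / D * rr in
  let X111 := 0 in
  let X211 := 2 * v / D * rr - 2 * rrr in
  let X102 := - (v / D) ^ 2 * rho + 2 * v / D * rr - rrr in
  let X202 := - (v / D) ^ 2 * rho + 2 * v / D * rr - rrr in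
  - (1 + eps * (-1) ^ m) * (v * Ch / 2 ^ m) * ((delta + 1) * S1 + (delta - 1) * S2)
  + (delta + 1) * (D / 2 ^ m) * Chr * ((Y101 - eps * Y201) * S1 + (Y110 - eps * Y210) * S2)
  + (delta + 1) * (INR m * D / 2 ^ m) * Ch * ((X120 - eps * X220) * S3 + (X102 - eps * X202) * S4
     + beta * ((X111 - eps * X211) * O2)).

Lemma Tsum_closed D v beta Peg eps delta m' rho rr rrr Ch Chr :
  Tsum D v beta Peg eps delta m' rho rr rrr Ch Chr = Tclosed D v beta eps delta m' rho rr rrr Ch Chr.
Proof.
  unfold Tsum, Tclosed. cbv zeta.
  rewrite Snu_sum_even_odd, Snu_sum_odd_odd, Snu_sum_even_odd_scaled, Snu_sum_odd_odd_scaled,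
    Snu_sum_even_even, sum_even_odd_scaled.
  ring.
Qed.

(* The weights (eta(w) + delta nu(w)) nu(w0) of the pairs of leading digits.
   Off the diagonal pair (1,1) they are b (wt0 + h wt1 + h^2 wt2), with
   coefficients depending on the class of the pair:
   0 : w, w0 in {0,2};  1 : w in {0,2}, w0 = 1;  2 : w = 1, w0 in {0,2}. *)
Definition weight_class (w w0 : nat) : nat :=
  match w, w0 with
  | 1%nat, _ => 2%nat
  | _, 1%nat => 1%nat
  | _, _ => 0%nat
  end.
Definition wt0 (b dl : R) (c : nat) : R :=
  match c with 0%nat => (1 + dl) * b / 4 | _ => (1 + dl) * (1 - b) / 2 end.
Definition wt1 (b kappa dl Iw I0 : R) (c : nat) : R :=
  match c with
  | 0%nat => (1 + dl) / 2 * (b * kappa * I0 / 4) + kappa * (dl - 1) * Iw / 4 * (b / 2)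
  | 1%nat => kappa * (dl - 1) * Iw * (1 - b) / 4
  | _ => (1 + dl) * (1 - b) * kappa * I0 / 4
  end.
Definition wt2 (b kappa dl Iw I0 : R) (c : nat) : R :=
  match c with 0%nat => kappa * (dl - 1) * Iw / 4 * (b * kappa * I0 / 4) | _ => 0 end.

Definition offdiag : list (nat * nat) :=
  [(0, 0); (0, 1); (0, 2); (1, 0); (1, 2); (2, 0); (2, 1); (2, 2)]%nat.

Lemma offdiag_digits p : In p offdiag -> is_digit (fst p) /\ is_digit (snd p).
Proof.
  unfold offdiag, is_digit. simpl. intros H.
  repeat (destruct H as [<- | H]; [simpl; tauto|]). destruct H.
Qed.

Lemma lsum_offdiag (g : nat * nat -> R) :
  lsum offdiag g = g (0, 0)%nat + g (0, 1)%nat + g (0, 2)%nat + g (1, 0)%nat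
                   + g (1, 2)%nat + g (2, 0)%nat + g (2, 1)%nat + g (2, 2)%nat.
Proof. unfold lsum, offdiag. simpl. ring. Qed.

Lemma weight_expansion b v D dl h w w0 : 0 < b < 1 -> D <> 0 -> In (w, w0) offdiag ->
  (eta b (v * h / D) w + dl * nu b (v * h / D) w) * nu b (v * h / D) w0 =
  b * (wt0 b dl (weight_class w w0) + h * wt1 b (v / D) dl (IwR w) (IwR w0) (weight_class w w0)
       + h ^ 2 * wt2 b (v / D) dl (IwR w) (IwR w0) (weight_class w w0)).
Proof.
  intros Hb HD Hp. unfold offdiag in Hp. simpl in Hp.
  repeat (destruct Hp as [Hp | Hp];
    [injection Hp as <- <-; unfold eta, nu, weight_class, wt0, wt1, wt2, IwR, Iw; simpl;
     field; auto|]).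
  destruct Hp.
Qed.

Lemma IwR_0 : IwR 0 = 1. Proof. reflexivity. Qed.
Lemma IwR_1 : IwR 1 = 0. Proof. reflexivity. Qed.
Lemma IwR_2 : IwR 2 = -1. Proof. reflexivity. Qed.

Lemma half_pow_signed (m' : nat) (s x : R) : s * s = 1 ->
  (s * x / 2) ^ (2 * m' + 1) = s * x * x ^ (2 * m') / (2 * 2 ^ (2 * m')) /\
  (s * x / 2) ^ (2 * m' + 1 - 1) = x ^ (2 * m') / 2 ^ (2 * m').
Proof.
  intros Hs. replace (2 * m' + 1 - 1)%nat with (2 * m')%nat by lia.
  assert (E : (s * x / 2) ^ (2 * m') = x ^ (2 * m') / 2 ^ (2 * m')).
  { rewrite !pow_mult. replace ((s * x / 2) ^ 2) with (x ^ 2 / 2 ^ 2).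
    2: { simpl. replace (s * x / 2 * (s * x / 2 * 1)) with ((s * s) * x * x / 4) by field.
         rewrite Hs. field. }
    unfold Rdiv. rewrite Rpow_mult_distr, pow_inv. auto. }
  split; auto. rewrite pow_add, E. simpl. field. apply pow_nonzero. lra.
Qed.

Section ExactOrders.
(* The two exact identities behind the theorem: the O(h^(m-2)) part of the site
   average vanishes, and its O(h^(m-1)) part is (T1 + T2 + T3). *)
Variables (D v b dl ep g0 g1 g2 Ch Chr : R) (m' : nat).
Hypothesis HD : D <> 0.

(* The eight values of a_coef are +-(B + A)/2, +-A/2, +-B/2, +-(B - A)/2 with
   A = v/D g0 and B = -v/D g0 + g1; odd powers keep the sign. *)
Ltac eval_a_coef :=
  rewrite ?IwR_0, ?IwR_1, ?IwR_2;
  replace (a_coef (v / D) 1 1 g0 g1) with ((-1) * ((- (v / D) * g0 + g1) + v / D * g0) / 2)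
    by (unfold a_coef; field; auto);
  replace (a_coef (v / D) 1 0 g0 g1) with ((-1) * (v / D * g0) / 2) by (unfold a_coef; field; auto);
  replace (a_coef (v / D) 1 (-1) g0 g1) with (1 * ((- (v / D) * g0 + g1) - v / D * g0) / 2)
    by (unfold a_coef; field; auto);
  replace (a_coef (v / D) 0 1 g0 g1) with ((-1) * (- (v / D) * g0 + g1) / 2) by (unfold a_coef; field; auto);
  replace (a_coef (v / D) 0 (-1) g0 g1) with (1 * (- (v / D) * g0 + g1) / 2) by (unfold a_coef; field; auto);
  replace (a_coef (v / D) (-1) 1 g0 g1) with ((-1) * ((- (v / D) * g0 + g1) - v / D * g0) / 2)
    by (unfold a_coef; field; auto);
  replace (a_coef (v / D) (-1) 0 g0 g1) with (1 * (v / D * g0) / 2) by (unfold a_coef; field; auto);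
  replace (a_coef (v / D) (-1) (-1) g0 g1) with (1 * ((- (v / D) * g0 + g1) + v / D * g0) / 2)
    by (unfold a_coef; field; auto);
  assert (Hm1 : (-1) * (-1) = 1) by ring; assert (Hp1 : 1 * 1 = 1) by ring;
  rewrite ?(proj1 (half_pow_signed m' (-1) _ Hm1)), ?(proj2 (half_pow_signed m' (-1) _ Hm1)),
          ?(proj1 (half_pow_signed m' 1 _ Hp1)), ?(proj2 (half_pow_signed m' 1 _ Hp1)).

(* The pairs cancel in opposite pairs (w,w0) <-> (2-w,2-w0), since m is odd. *)
Lemma leading_order_cancels :
  lsum offdiag (fun p => wt0 b dl (weight_class (fst p) (snd p)) *
    (Ch * a_coef (v / D) (IwR (fst p)) (IwR (snd p)) g0 g1 ^ (2 * m' + 1))) = 0.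
Proof.
  rewrite lsum_offdiag. cbn [fst snd weight_class]. eval_a_coef.
  unfold wt0. field. split; [auto|apply pow_nonzero; lra].
Qed.

Lemma next_order_identity :
  lsum offdiag (fun p =>
    wt1 b (v / D) dl (IwR (fst p)) (IwR (snd p)) (weight_class (fst p) (snd p)) *
      (Ch * a_coef (v / D) (IwR (fst p)) (IwR (snd p)) g0 g1 ^ (2 * m' + 1) * (1 - ep))
    + wt0 b dl (weight_class (fst p) (snd p)) *
      (order1_coef (v / D) (IwR (fst p)) (IwR (snd p)) 0 g0 g1 g2 Ch Chr (2 * m' + 1)
       - ep * order1_coef (v / D) (IwR (fst p)) (IwR (snd p)) (IwR (fst p)) g0 g1 g2 Ch Chr (2 * m' + 1)))
  = Tclosed D v b ep dl m' g0 g1 g2 Ch Chr / (2 * D).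
Proof.
  rewrite lsum_offdiag. cbn [fst snd weight_class].
  unfold order1_coef, b_coef. eval_a_coef.
  unfold Tclosed. cbv zeta.
  rewrite !pow_add, pow_1.
  replace ((-1) ^ (2 * m')) with 1 by (rewrite pow_mult; replace ((-1) ^ 2) with 1 by ring; rewrite pow1; auto).
  rewrite plus_INR, mult_INR.
  set (QP := ((- (v / D) * g0 + g1) + v / D * g0) ^ (2 * m')).
  set (QM := ((- (v / D) * g0 + g1) - v / D * g0) ^ (2 * m')).
  set (QA := (v / D * g0) ^ (2 * m')).
  set (QB := (- (v / D) * g0 + g1) ^ (2 * m')).
  set (T2 := 2 ^ (2 * m')).
  assert (T2 <> 0) by (apply pow_nonzero; lra).
  unfold wt0, wt1, y_coef. field. auto.
Qed.
End ExactOrders.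

Definition trailing_sum (b P : R) (f : R -> R -> R) (sd : Z -> Z -> R) (k1 : nat) (l n : Z)
    (w w0 : nat) : R :=
  lsum (trits k1) (fun wp => nuw b P wp * Ffun b P f sd l n w (w0 :: wp)).

Lemma Kval_leading_pairs D v b h k1 m eps delta f sd n l :
  Kval D v b h (S k1) m eps delta f sd n l =
  h * lsum [0%nat; 1%nat; 2%nat] (fun w => lsum [0%nat; 1%nat; 2%nat] (fun w0 =>
     (eta b (v * h / D) w + delta * nu b (v * h / D) w) * nu b (v * h / D) w0 *
     (trailing_sum b (v * h / D) f sd k1 l n w w0
      + eps * (-1) ^ m * trailing_sum b (v * h / D) f sd k1 l (n + Iw w)%Z w w0))).
Proof.
  unfold Kval. rewrite <- lsum_scal. apply lsum_ext. intros w _.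
  rewrite lsum_trits_S, lsum_digits. unfold trailing_sum.
  set (P := v * h / D).
  set (c := eta b P w + delta * nu b P w).
  set (e := eps * (-1) ^ m).
  set (F := fun w0 wp => Ffun b P f sd l n w (w0 :: wp)).
  set (F' := fun w0 wp => Ffun b P f sd l (n + Iw w) w (w0 :: wp)).
  transitivity (lsum (trits k1) (fun wp => h * (
     (c * nu b P 0 * (nuw b P wp * F 0%nat wp + e * (nuw b P wp * F' 0%nat wp))
     + c * nu b P 1 * (nuw b P wp * F 1%nat wp + e * (nuw b P wp * F' 1%nat wp)))
     + c * nu b P 2 * (nuw b P wp * F 2%nat wp + e * (nuw b P wp * F' 2%nat wp))))).
  - apply lsum_ext. intros wp _. rewrite !nuw_cons. unfold F, F'. ring.
  - rewrite lsum_scal, !lsum_plus, !lsum_scal, !lsum_plus, !lsum_scal. unfold F, F'. ring.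
Qed.

(* When f vanishes on the diagonal (as it does for odd m) the pair (1,1) of
   leading digits, whose two arguments coincide, contributes nothing. *)
Lemma trailing_sum_diagonal b P f sd k1 l n :
  (forall x, f x x = 0) -> trailing_sum b P f sd k1 l n 1 1 = 0.
Proof.
  intros Hd. unfold trailing_sum.
  transitivity (lsum (trits k1) (fun wp : list nat => 0 * nuw b P wp)).
  - apply lsum_ext. intros wp _. unfold Ffun.
    replace (n + Iw 1)%Z with n by (unfold Iw; simpl; lia). rewrite Hd. ring.
  - rewrite lsum_scal. ring.
Qed.

Lemma lsum_grid_offdiag (g : nat -> nat -> R) : g 1%nat 1%nat = 0 ->
  lsum [0%nat; 1%nat; 2%nat] (fun w => lsum [0%nat; 1%nat; 2%nat] (fun w0 => g w w0)) =
  lsum offdiag (fun p => g (fst p) (snd p)).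
Proof. intros H11. rewrite !lsum_digits, lsum_offdiag. simpl. rewrite H11. ring. Qed.

Lemma avgA_offdiag D v b h k1 m' eps delta f sd n l :
  0 < D -> 0 < b -> 0 < h -> (forall x, f x x = 0) ->
  avgA D v b h (S k1) (2 * m' + 1) eps delta f sd n l =
  2 * D / (b * h ^ 2) * lsum offdiag (fun p =>
    (eta b (v * h / D) (fst p) + delta * nu b (v * h / D) (fst p)) * nu b (v * h / D) (snd p) *
    (trailing_sum b (v * h / D) f sd k1 l n (fst p) (snd p)
     - eps * trailing_sum b (v * h / D) f sd k1 l (n + Iw (fst p))%Z (fst p) (snd p))).
Proof.
  intros HD Hb Hh Hdiag.
  assert (Hodd : (-1) ^ (2 * m' + 1) = -1)
    by (rewrite pow_add, pow_mult; replace ((-1) ^ 2) with 1 by ring; rewrite pow1; ring).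
  unfold avgA. rewrite Kval_leading_pairs, lsum_grid_offdiag.
  - rewrite (lsum_ext offdiag _ (fun p =>
      (eta b (v * h / D) (fst p) + delta * nu b (v * h / D) (fst p)) * nu b (v * h / D) (snd p) *
      (trailing_sum b (v * h / D) f sd k1 l n (fst p) (snd p)
       - eps * trailing_sum b (v * h / D) f sd k1 l (n + Iw (fst p))%Z (fst p) (snd p))))
      by (intros p _; rewrite Hodd; ring).
    unfold tau_of. field. repeat split; lra.
  - rewrite !trailing_sum_diagonal by exact Hdiag. ring.
Qed.

Lemma expansion_assembly {I : Type} (L : list I) (D h b eps T Kb : R) (m' : nat)
    (Wt G G' c0 c1 c2 A B B' : I -> R) :
  0 < D -> 0 < h <= 1 -> 0 < b -> Rabs eps <= 1 -> 0 <= Kb ->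
  (forall i, In i L -> Wt i = b * (c0 i + h * c1 i + h ^ 2 * c2 i)) ->
  (forall i, In i L -> Rabs (G i - (h ^ (2 * m' + 1) * A i + h ^ (2 * m' + 1 + 1) * B i))
                       <= Kb * h ^ (2 * m' + 1 + 2)) ->
  (forall i, In i L -> Rabs (G' i - (h ^ (2 * m' + 1) * A i + h ^ (2 * m' + 1 + 1) * B' i))
                       <= Kb * h ^ (2 * m' + 1 + 2)) ->
  (forall i, In i L -> Rabs (c0 i) <= Kb /\ Rabs (c1 i) <= Kb /\ Rabs (c2 i) <= Kb /\
                       Rabs (A i) <= Kb /\ Rabs (B i) <= Kb /\ Rabs (B' i) <= Kb) ->
  lsum L (fun i => c0 i * A i) = 0 ->
  lsum L (fun i => c1 i * (A i * (1 - eps)) + c0 i * (B i - eps * B' i)) = T / (2 * D) ->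
  Rabs (2 * D / (b * h ^ 2) * lsum L (fun i => Wt i * (G i - eps * G' i)) - h ^ (2 * m') * T)
    <= 2 * D * (INR (length L) * (14 * Kb ^ 2)) * h ^ (2 * m' + 1).
Proof.
  intros HD Hh Hb Heps HKb HW HG HG' Hbd Hlead Hnext.
  assert (Hh3 : 0 < h ^ (2 * m' + 1 + 2)) by (apply pow_lt; lra).
  set (E := fun i => (G i - (h ^ (2 * m' + 1) * A i + h ^ (2 * m' + 1 + 1) * B i)) / h ^ (2 * m' + 1 + 2)).
  set (E' := fun i => (G' i - (h ^ (2 * m' + 1) * A i + h ^ (2 * m' + 1 + 1) * B' i)) / h ^ (2 * m' + 1 + 2)).
  set (Rem := fun i => c2 i * A i * (1 - eps) + (c1 i + h * c2 i) * (B i - eps * B' i)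
                       + (c0 i + h * c1 i + h ^ 2 * c2 i) * (E i - eps * E' i)).
  assert (Hterm : forall i, In i L -> Wt i * (G i - eps * G' i) =
     b * h ^ (2 * m' + 1) * (c0 i * A i) * (1 - eps)
     + b * h ^ (2 * m' + 1 + 1) * (c1 i * (A i * (1 - eps)) + c0 i * (B i - eps * B' i))
     + b * h ^ (2 * m' + 1 + 2) * Rem i).
  { intros i Hi. rewrite (HW i Hi).
    replace (G i) with (h ^ (2 * m' + 1) * A i + h ^ (2 * m' + 1 + 1) * B i + h ^ (2 * m' + 1 + 2) * E i)
      by (unfold E; field; lra).
    replace (G' i) with (h ^ (2 * m' + 1) * A i + h ^ (2 * m' + 1 + 1) * B' i + h ^ (2 * m' + 1 + 2) * E' i)
      by (unfold E'; field; lra).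
    unfold Rem. rewrite !pow_add. ring. }
  rewrite (lsum_ext L _ _ Hterm), !lsum_plus.
  rewrite (lsum_ext L (fun i => b * h ^ (2 * m' + 1) * (c0 i * A i) * (1 - eps))
                      (fun i => (b * h ^ (2 * m' + 1) * (1 - eps)) * (c0 i * A i))) by (intros; ring).
  rewrite !lsum_scal, Hlead, Hnext.
  assert (Hid : 2 * D / (b * h ^ 2) * (b * h ^ (2 * m' + 1) * (1 - eps) * 0 + b * h ^ (2 * m' + 1 + 1)
                 * (T / (2 * D)) + b * h ^ (2 * m' + 1 + 2) * lsum L Rem) - h ^ (2 * m') * T
                = 2 * D * h ^ (2 * m' + 1) * lsum L Rem).
  { rewrite !pow_add. field. repeat split; lra. }
  rewrite Hid.
  assert (Hpos : 0 <= 2 * D * h ^ (2 * m' + 1)) by (apply Rmult_le_pos; [lra|apply pow_le; lra]).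
  rewrite Rabs_mult, (Rabs_pos_eq (2 * D * h ^ (2 * m' + 1))) by exact Hpos.
  assert (HRem : Rabs (lsum L Rem) <= INR (length L) * (14 * Kb ^ 2)).
  { apply lsum_abs_bound. intros i Hi.
    destruct (Hbd i Hi) as (H0 & H1 & H2 & HA & HB & HB').
    assert (HE : Rabs (E i) <= Kb) by (apply div_bound; [lra|exact (HG i Hi)]).
    assert (HE' : Rabs (E' i) <= Kb) by (apply div_bound; [lra|exact (HG' i Hi)]).
    assert (Hhabs : Rabs h <= 1) by (rewrite Rabs_pos_eq; lra).
    assert (H1e : Rabs (1 - eps) <= 2) by (eapply Rle_trans; [bound_tac|]; rewrite Rabs_R1; lra).
    unfold Rem. eapply Rle_trans; [bound_tac|]. simpl. nra. }
  replace (2 * D * (INR (length L) * (14 * Kb ^ 2)) * h ^ (2 * m' + 1))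
    with (2 * D * h ^ (2 * m' + 1) * (INR (length L) * (14 * Kb ^ 2))) by ring.
  apply Rmult_le_compat_l; [exact Hpos|exact HRem].
Qed.

Lemma coefficient_bounds (kappa K : R) (m : nat) : exists Kc, 0 <= Kc /\
  forall Iw I0 s g0 g1 g2 Ch Chr,
    Rabs Iw <= 1 -> Rabs I0 <= 1 -> Rabs s <= 1 ->
    Rabs g0 <= K -> Rabs g1 <= K -> Rabs g2 <= K -> Rabs Ch <= K -> Rabs Chr <= K ->
    Rabs (Ch * a_coef kappa Iw I0 g0 g1 ^ m) <= Kc /\
    Rabs (order1_coef kappa Iw I0 s g0 g1 g2 Ch Chr m) <= Kc /\
    Rabs (shift_coef kappa Iw I0 g0 g1 g2 Ch Chr m) <= Kc.
Proof.
  assert (Hex : exists C1 C2 C3, forall Iw I0 s g0 g1 g2 Ch Chr,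
    Rabs Iw <= 1 -> Rabs I0 <= 1 -> Rabs s <= 1 ->
    Rabs g0 <= K -> Rabs g1 <= K -> Rabs g2 <= K -> Rabs Ch <= K -> Rabs Chr <= K ->
    Rabs (Ch * a_coef kappa Iw I0 g0 g1 ^ m) <= C1 /\
    Rabs (order1_coef kappa Iw I0 s g0 g1 g2 Ch Chr m) <= C2 /\
    Rabs (shift_coef kappa Iw I0 g0 g1 g2 Ch Chr m) <= C3).
  { do 3 eexists. intros.
    unfold order1_coef, shift_coef, y_coef, b_coef, a_coef. repeat split; bound_tac. }
  destruct Hex as [C1 [C2 [C3 Hbd]]].
  exists (Rabs C1 + Rabs C2 + Rabs C3).
  split; [pose proof (Rabs_pos C1); pose proof (Rabs_pos C2); pose proof (Rabs_pos C3); lra|].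
  intros. destruct (Hbd Iw I0 s g0 g1 g2 Ch Chr) as (Hc1 & Hc2 & Hc3); auto.
  pose proof (Rle_abs C1). pose proof (Rle_abs C2). pose proof (Rle_abs C3).
  pose proof (Rabs_pos C1). pose proof (Rabs_pos C2). pose proof (Rabs_pos C3).
  repeat split; lra.
Qed.

Lemma weight_bounds b kappa dl Iw I0 c : 0 < b < 1 -> Rabs dl <= 1 -> Rabs Iw <= 1 -> Rabs I0 <= 1 ->
  Rabs (wt0 b dl c) <= 2 + Rabs kappa + kappa ^ 2 /\
  Rabs (wt1 b kappa dl Iw I0 c) <= 2 + Rabs kappa + kappa ^ 2 /\
  Rabs (wt2 b kappa dl Iw I0 c) <= 2 + Rabs kappa + kappa ^ 2.
Proof.
  intros Hb Hdl HIw HI0.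
  assert (Hb1 : Rabs b <= 1) by (rewrite Rabs_pos_eq; lra).
  assert (H1 : Rabs 1 <= 1) by (rewrite Rabs_R1; lra).
  assert (H2 : Rabs (/ 2) <= / 2) by (rewrite Rabs_pos_eq; [lra|]; apply Rlt_le, Rinv_0_lt_compat; lra).
  assert (H4 : Rabs (/ 4) <= / 4) by (rewrite Rabs_pos_eq; [lra|]; apply Rlt_le, Rinv_0_lt_compat; lra).
  pose proof (Rabs_pos kappa). pose proof (pow2_ge_0 kappa).
  assert (Hk2 : Rabs kappa * Rabs kappa = kappa ^ 2) by (rewrite <- Rabs_mult, Rabs_pos_eq by nra; ring).
  destruct c as [|[|c]]; unfold wt0, wt1, wt2; repeat split;
    try (rewrite Rabs_R0; lra); (eapply Rle_trans; [bound_tac|]); nra.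
Qed.

Lemma abs_shift_le (x a y e d : R) :
  Rabs (x - (a + y)) <= e -> Rabs y <= d -> Rabs (x - a) <= e + d.
Proof.
  intros H1 H2. replace (x - a) with ((x - (a + y)) + y) by ring.
  eapply Rle_trans; [apply Rabs_triang|lra].
Qed.

Lemma nu_average_expansion (b P : R) (k1 : nat) (F : list nat -> R) (main slope C : R) :
  0 < b < 1 -> Rabs P <= 1 ->
  (forall wp, In wp (trits k1) -> Rabs (F wp - (main + slope * shiftR wp)) <= C) ->
  Rabs (lsum (trits k1) (fun wp => nuw b P wp * F wp) - (main + slope * (INR k1 * (b * P / 2))))
    <= C.
Proof.
  intros Hb HP Herr.
  rewrite (lsum_ext _ _ (fun wp => main * nuw b P wp + slope * (nuw b P wp * shiftR wp)
                          + nuw b P wp * (F wp - (main + slope * shiftR wp)))) by (intros; ring).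
  rewrite !lsum_plus, !lsum_scal, lsum_nuw, lsum_nuw_shift, nu_first_moment.
  replace (main * 1 + slope * (INR k1 * (b * P / 2))
           + lsum (trits k1) (fun wp => nuw b P wp * (F wp - (main + slope * shiftR wp)))
           - (main + slope * (INR k1 * (b * P / 2))))
    with (lsum (trits k1) (fun wp => nuw b P wp * (F wp - (main + slope * shiftR wp)))) by ring.
  eapply Rle_trans; [apply lsum_abs|].
  rewrite <- (Rmult_1_r C), <- (lsum_nuw k1 b P), <- lsum_scal.
  apply lsum_le. intros wp Hwp. destruct (trits_digits k1 wp Hwp) as [_ HF].
  assert (Hnu : 0 <= nuw b P wp) by (apply nuw_nonneg; auto; apply nu_nonneg; unfold is_digit; auto).
  rewrite Rabs_mult, (Rabs_pos_eq (nuw b P wp)) by exact Hnu.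
  rewrite Rmult_comm. apply Rmult_le_compat_r; [exact Hnu|exact (Herr wp Hwp)].
Qed.

Lemma offsets_bounded (s : Z) (w w0 : nat) (wp : list nat) (k1 : nat) :
  is_digit w -> is_digit w0 -> (s = 0 \/ s = Iw w)%Z -> length wp = k1 -> Forall is_digit wp ->
  Rabs (IZR s + shiftR wp) <= INR k1 + 2 /\ Rabs (IZR s + shiftR wp + IwR w0) <= INR k1 + 2.
Proof.
  intros Hw Hw0 Hs Hlen HF.
  assert (Hsg : Rabs (shiftR wp) <= INR k1) by (rewrite <- Hlen; apply shiftR_bound, HF).
  assert (HsR : Rabs (IZR s) <= 1).
  { destruct Hs as [-> | ->]; [rewrite Rabs_R0; lra|]. apply IwR_digit, Hw. }
  pose proof (IwR_digit w0 Hw0).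
  assert (Hu : Rabs (IZR s + shiftR wp) <= INR k1 + 1) by (eapply Rle_trans; [apply Rabs_triang|lra]).
  split; [lra|]. eapply Rle_trans; [apply Rabs_triang|lra].
Qed.

Section SmallStep.
Variables (D v : R) (beta : R -> R) (k1 : nat) (rho rho_r rho_rr : R -> R -> R) (m : nat)
  (f : R -> R -> R) (Chat Chat_rho : R -> R) (R0 T0 : R).
Hypothesis HD : 0 < D.
Hypothesis Hbeta : forall dr, 0 < dr -> 0 < beta dr < 1.
Hypothesis Hrho : smooth2 rho.
Hypothesis Hrho_r : forall r t, derivable_pt_lim (fun s => rho s t) r (rho_r r t).
Hypothesis Hrho_rr : forall r t, derivable_pt_lim (fun s => rho_r s t) r (rho_rr r t).
Hypothesis HC : smooth1 Chat.
Hypothesis HCd : forall y, derivable_pt_lim Chat y (Chat_rho y).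
Hypothesis Hfexp : forall M, 0 < M -> exists c e, 0 < e /\
  forall x y, Rabs ((x + y) / 2) <= M -> Rabs ((x - y) / 2) < e ->
    Rabs (f x y - Chat ((x + y) / 2) * ((x - y) / 2) ^ m) <= c * Rabs ((x - y) / 2) ^ (m + 2).

Lemma cell_expansion : exists Cf h0, 0 < h0 /\
  forall h n l w w0 s wp, 0 < h < h0 ->
    Rabs (IZR n * h) <= R0 -> Rabs (IZR l * tau_of D (beta h) h) <= T0 ->
    is_digit w -> is_digit w0 -> (s = 0 \/ s = Iw w)%Z -> In wp (trits k1) ->
    let r := IZR n * h in
    let t := IZR l * tau_of D (beta h) h in
    let sd := fun n' l' => rho (IZR n' * h) (IZR l' * tau_of D (beta h) h) in
    Rabs (Ffun (beta h) (v * h / D) f sd l (n + s) w (w0 :: wp)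
          - (h ^ m * (Chat (rho r t) * a_coef (v / D) (IwR w) (IwR w0) (rho r t) (rho_r r t) ^ m)
             + h ^ (m + 1) *
               (order1_coef (v / D) (IwR w) (IwR w0) (IZR s) (rho r t) (rho_r r t) (rho_rr r t)
                  (Chat (rho r t)) (Chat_rho (rho r t)) m
                + shiftR wp * shift_coef (v / D) (IwR w) (IwR w0) (rho r t) (rho_r r t)
                    (rho_rr r t) (Chat (rho r t)) (Chat_rho (rho r t)) m)))
      <= Cf * h ^ (m + 2).
Proof.
  set (kappa := v / D).
  destruct (density_estimates rho rho_r rho_rr Hrho Hrho_r Hrho_rr (Rabs R0) (Rabs T0 + 1))
    as [Br [HBr [Hval [Htay Htime]]]].
  destruct (ratio_prod_expands kappa k1) as [Kc [HKc HPc]].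
  set (c := (INR k1 + 1) / (2 * D)).
  set (Z := INR k1 + 2).
  set (Kr := 1 + Rabs kappa + kappa ^ 2 + Rabs kappa ^ 3).
  set (Kd := Br * (1 + c) * (1 + Z) ^ 3).
  set (K0 := Kr + Kc + Kd).
  pose proof (pos_INR k1) as Hk1.
  assert (Hc : 0 <= c) by (unfold c; apply Rmult_le_pos; [lra|apply Rlt_le, Rinv_0_lt_compat; lra]).
  assert (HKr : 1 <= Kr) by (unfold Kr; pose proof (Rabs_pos kappa); pose proof (pow2_ge_0 kappa);
                             pose proof (pow_le (Rabs kappa) 3 (Rabs_pos kappa)); lra).
  assert (HKd : 0 <= Kd) by (unfold Kd, Z; apply Rmult_le_pos; [nra|apply pow_le; lra]).
  assert (HK0 : 1 <= K0) by (unfold K0; lra).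
  set (K1 := 10 * (10 * K0 ^ 2) ^ 2).
  assert (HK1 : 1 <= K1).
  { unfold K1. assert (1 <= K0 ^ 2) by (simpl; nra).
    assert (1 <= (10 * K0 ^ 2) ^ 2) by (simpl; nra). lra. }
  destruct (f_expansion f Chat Chat_rho m HC HCd Hfexp K1 HK1) as [Cf [hf [Hhf Hfe]]].
  set (M := 1 + Rabs kappa + Z + c).
  assert (HM : 0 < M) by (unfold M, Z; pose proof (Rabs_pos kappa); lra).
  exists Cf, (Rmin hf (1 / M)). split; [apply Rmin_glb_lt; [lra|apply Rdiv_lt_0_compat; lra]|].
  intros h n l w w0 s wp Hh Hr Ht Hw Hw0 Hs Hwp r t sd.
  change (IZR n * h) with r in Hr. change (IZR l * tau_of D (beta h) h) with t in Ht.
  destruct (below_min_div h hf 1 M HM (proj2 Hh)) as [Hhf' HhM].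
  destruct (Hbeta h ltac:(lra)) as [Hb0 Hb1].
  destruct (small_step D kappa (beta h) h k1 HD (conj Hb0 Hb1) ltac:(lra) HhM)
    as (Hh1 & Hkh & HZh & Htau & Hlag).
  fold c Z in Htau, Hlag, HZh.
  assert (Hhabs : Rabs h <= 1) by (rewrite Rabs_pos_eq; lra).
  destruct (trits_digits k1 wp Hwp) as [Hlen HF].
  set (sg := shiftR wp).
  set (u := IZR s + sg).
  destruct (offsets_bounded s w w0 wp k1 Hw Hw0 Hs Hlen HF) as [Hu Hu0]. fold sg u Z in Hu, Hu0.
  assert (Hzh : forall z, Rabs z <= Z -> Rabs (z * h) <= 1).
  { intros z Hz. rewrite Rabs_mult, (Rabs_pos_eq h) by lra. unfold Z in *. nra. }
  set (dt := - ((INR k1 + 1) * tau_of D (beta h) h)).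
  assert (Hdt : Rabs dt <= c * h ^ 2) by (unfold dt; rewrite Rabs_Ropp; exact Htau).
  assert (Htdt : Rabs (t + dt) <= Rabs T0 + 1).
  { eapply Rle_trans; [apply Rabs_triang|]. pose proof (Rle_abs T0). lra. }
  assert (Hr' : Rabs r <= Rabs R0) by (pose proof (Rle_abs R0); lra).
  assert (Ht' : Rabs t <= Rabs T0 + 1) by (pose proof (Rle_abs T0); lra).
  replace (v * h / D) with (kappa * h) by (unfold kappa; field; lra).
  unfold sd. rewrite (Ffun_cell_arguments (beta h) (kappa * h) h _ f rho k1 l n s w w0 wp Hlen).
  fold r t dt u sg.
  assert (Hqw := ratio_expands (beta h) kappa h w (conj Hb0 Hb1) Hkh Hw).
  assert (Hq0 := ratio_expands (beta h) kappa h w0 (conj Hb0 Hb1) Hkh Hw0).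
  destruct (HPc (beta h) h wp (conj Hb0 Hb1) (conj (proj1 Hh) Hh1) Hkh Hlen HF) as [Ec Hcp].
  assert (HA := displaced_density_expands rho rho_r rho_rr Br (Rabs R0) (Rabs T0 + 1) HBr Hval
                  Htay Htime r t dt u h c Z (conj (proj1 Hh) Hh1) Hc Hu (Hzh u Hu) Hr' Ht' Htdt Hdt
                  ltac:(lra)).
  assert (HB := displaced_density_expands rho rho_r rho_rr Br (Rabs R0) (Rabs T0 + 1) HBr Hval
                  Htay Htime r t dt (u + IwR w0) h c Z (conj (proj1 Hh) Hh1) Hc Hu0
                  (Hzh _ Hu0) Hr' Ht' Htdt Hdt ltac:(lra)).
  fold Kr Kd in Hqw, Hq0, HA, HB.
  apply (expands_weaken _ K0) in Hqw, Hq0, Hcp, HA, HB; try (unfold K0; lra).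
  destruct (arguments_expand K0 h kappa (IwR w) (IwR w0) sg u (rho r t) (rho_r r t) (rho_rr r t)
              Ec ((rho r (t + dt) - rho r t) / h ^ 2) _ _ _ _ _ ltac:(lra) Hhabs Hqw Hq0 Hcp HA HB)
    as [Hdiff [c2 Hmean]].
  fold K1 in Hdiff, Hmean.
  rewrite <- order1_affine.
  exact (Hfe h _ _ _ _ _ _ _ (conj (proj1 Hh) Hhf') Hdiff Hmean).
Qed.

(* Averaging the cell expansion over the trailing digits with the weights nu:
   the terms linear in the trailing displacement average to O(h). *)
Lemma trailing_sum_expansion : exists Kt h0, 0 < h0 /\
  forall h n l w w0 s, 0 < h < h0 ->
    Rabs (IZR n * h) <= R0 -> Rabs (IZR l * tau_of D (beta h) h) <= T0 ->
    is_digit w -> is_digit w0 -> (s = 0 \/ s = Iw w)%Z ->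
    let r := IZR n * h in
    let t := IZR l * tau_of D (beta h) h in
    let sd := fun n' l' => rho (IZR n' * h) (IZR l' * tau_of D (beta h) h) in
    Rabs (trailing_sum (beta h) (v * h / D) f sd k1 l (n + s) w w0
          - (h ^ m * (Chat (rho r t) * a_coef (v / D) (IwR w) (IwR w0) (rho r t) (rho_r r t) ^ m)
             + h ^ (m + 1) * order1_coef (v / D) (IwR w) (IwR w0) (IZR s) (rho r t) (rho_r r t)
                 (rho_rr r t) (Chat (rho r t)) (Chat_rho (rho r t)) m))
      <= Kt * h ^ (m + 2).
Proof.
  destruct cell_expansion as [Cf [h0 [Hh0 Hcell]]].
  destruct (density_estimates rho rho_r rho_rr Hrho Hrho_r Hrho_rr (Rabs R0) (Rabs T0))
    as [Br [HBr [Hval _]]].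
  destruct (coefficient_estimates Chat Chat_rho HC HCd Br) as [BC [HBC HCf]].
  destruct (coefficient_bounds (v / D) (Br + BC) m) as [Kc [HKc Hcoef]].
  exists (Rabs Cf + INR k1 * (Rabs (v / D) / 2) * Kc), (Rmin h0 (D / (Rabs v + 1))). split.
  { pose proof (Rabs_pos v). apply Rmin_glb_lt; [lra|apply Rdiv_lt_0_compat; lra]. }
  intros h n l w w0 s Hh Hr Ht Hw Hw0 Hs r t sd.
  change (IZR n * h) with r in Hr. change (IZR l * tau_of D (beta h) h) with t in Ht.
  pose proof (Rabs_pos v).
  destruct (below_min_div h h0 D (Rabs v + 1) ltac:(lra) (proj2 Hh)) as [Hh0' Hhv].
  assert (HP : Rabs (v * h / D) <= 1).
  { unfold Rdiv. rewrite !Rabs_mult, Rabs_inv, (Rabs_pos_eq h), (Rabs_pos_eq D) by lra.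
    apply (Rmult_le_reg_r D); [lra|]. rewrite Rmult_assoc, Rinv_l by lra. nra. }
  destruct (Hbeta h ltac:(lra)) as [Hb0 Hb1].
  destruct (Hval r t ltac:(pose proof (Rle_abs R0); lra) ltac:(pose proof (Rle_abs T0); lra))
    as (Hg0 & Hg1 & Hg2).
  destruct (HCf (rho r t) 0 Hg0 ltac:(rewrite Rabs_R0; lra)) as (HCh & HChr & _).
  assert (HsR : Rabs (IZR s) <= 1) by (destruct Hs as [-> | ->]; [rewrite Rabs_R0; lra|apply IwR_digit, Hw]).
  destruct (Hcoef (IwR w) (IwR w0) (IZR s) (rho r t) (rho_r r t) (rho_rr r t) (Chat (rho r t))
              (Chat_rho (rho r t)) (IwR_digit w Hw) (IwR_digit w0 Hw0) HsR) as (_ & _ & HMd);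
    try lra.
  set (Md := shift_coef (v / D) (IwR w) (IwR w0) (rho r t) (rho_r r t) (rho_rr r t) (Chat (rho r t))
               (Chat_rho (rho r t)) m) in HMd.
  set (main := h ^ m * (Chat (rho r t) * a_coef (v / D) (IwR w) (IwR w0) (rho r t) (rho_r r t) ^ m)
    + h ^ (m + 1) * order1_coef (v / D) (IwR w) (IwR w0) (IZR s) (rho r t) (rho_r r t) (rho_rr r t)
        (Chat (rho r t)) (Chat_rho (rho r t)) m).
  pose proof (nu_average_expansion (beta h) (v * h / D) k1
    (fun wp => Ffun (beta h) (v * h / D) f sd l (n + s) w (w0 :: wp)) main (h ^ (m + 1) * Md)
    (Cf * h ^ (m + 2)) (conj Hb0 Hb1) HP) as Havg.
  cbv beta in Havg.
  assert (Hcells : forall wp, In wp (trits k1) ->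
            Rabs (Ffun (beta h) (v * h / D) f sd l (n + s) w (w0 :: wp)
                  - (main + h ^ (m + 1) * Md * shiftR wp)) <= Cf * h ^ (m + 2)).
  { intros wp Hwp.
    eapply Rle_trans; [|exact (Hcell h n l w w0 s wp (conj (proj1 Hh) Hh0') Hr Ht Hw Hw0 Hs Hwp)].
    right. apply f_equal. cbv zeta. unfold main, Md, r, t, sd. ring. }
  assert (Hslope : Rabs (h ^ (m + 1) * Md * (INR k1 * (beta h * (v * h / D) / 2)))
                   <= INR k1 * (Rabs (v / D) / 2) * Kc * h ^ (m + 2)).
  { replace (h ^ (m + 1) * Md * (INR k1 * (beta h * (v * h / D) / 2)))
      with (h ^ (m + 2) * (INR k1 * (beta h / 2) * (v / D) * Md)) by (rewrite !pow_add; field; lra).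
    rewrite Rabs_mult, (Rabs_pos_eq (h ^ (m + 2))) by (apply pow_le; lra).
    rewrite !Rabs_mult, (Rabs_pos_eq (INR k1)), (Rabs_pos_eq (beta h / 2)) by (apply pos_INR || lra).
    pose proof (pos_INR k1). pose proof (Rabs_pos (v / D)). pose proof (Rabs_pos Md).
    pose proof (pow_le h (m + 2) ltac:(lra)).
    assert (HX : 0 <= INR k1 * Rabs (v / D)) by (apply Rmult_le_pos; lra).
    assert (INR k1 * Rabs (v / D) * Rabs Md <= INR k1 * Rabs (v / D) * Kc)
      by (apply Rmult_le_compat_l; lra).
    assert (0 <= INR k1 * Rabs (v / D) * Rabs Md) by (apply Rmult_le_pos; lra).
    assert (INR k1 * (beta h / 2) * Rabs (v / D) * Rabs Md <= INR k1 * (Rabs (v / D) / 2) * Kc)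
      by nra.
    nra. }
  unfold trailing_sum. eapply Rle_trans; [exact (abs_shift_le _ _ _ _ _ (Havg Hcells) Hslope)|].
  pose proof (Rle_abs Cf). pose proof (pow_le h (m + 2) ltac:(lra)). nra.
Qed.

End SmallStep.

Section SiteAverage.
Variables (D v : R) (beta : R -> R) (k1 : nat) (rho rho_r rho_rr : R -> R -> R) (m' : nat)
  (f : R -> R -> R) (Chat Chat_rho : R -> R) (eps delta : R).
Hypothesis HD : 0 < D.
Hypothesis Hbeta : forall dr, 0 < dr -> 0 < beta dr < 1.
Hypothesis Hrho : smooth2 rho.
Hypothesis Hrho_r : forall r t, derivable_pt_lim (fun s => rho s t) r (rho_r r t).
Hypothesis Hrho_rr : forall r t, derivable_pt_lim (fun s => rho_r s t) r (rho_rr r t).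
Hypothesis HC : smooth1 Chat.
Hypothesis HCd : forall y, derivable_pt_lim Chat y (Chat_rho y).
Hypothesis Hfexp : forall M, 0 < M -> exists c e, 0 < e /\
  forall x y, Rabs ((x + y) / 2) <= M -> Rabs ((x - y) / 2) < e ->
    Rabs (f x y - Chat ((x + y) / 2) * ((x - y) / 2) ^ (2 * m' + 1))
      <= c * Rabs ((x - y) / 2) ^ (2 * m' + 1 + 2).
Hypothesis Hdiag : forall x, f x x = 0.
Hypothesis Heps : Rabs eps <= 1.
Hypothesis Hdelta : Rabs delta <= 1.

Lemma site_average_expansion (R0 T0 : R) : exists Cst h0, 0 < h0 /\
  forall (dr : R) (n l : Z), 0 < dr < h0 ->
    Rabs (IZR n * dr) <= R0 -> Rabs (IZR l * tau_of D (beta dr) dr) <= T0 ->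
    let tau := tau_of D (beta dr) dr in
    let sd := fun (n' l' : Z) => rho (IZR n' * dr) (IZR l' * tau) in
    let r := IZR n * dr in
    let t := IZR l * tau in
    Rabs (avgA D v (beta dr) dr (S k1) (2 * m' + 1) eps delta f sd n l
          - dr ^ (2 * m') * Tsum D v (beta dr) (v * dr / D) eps delta m'
              (rho r t) (rho_r r t) (rho_rr r t) (Chat (rho r t)) (Chat_rho (rho r t)))
      <= Cst * dr ^ (2 * m' + 1).
Proof.
  set (kappa := v / D).
  destruct (trailing_sum_expansion D v beta k1 rho rho_r rho_rr (2 * m' + 1) f Chat Chat_rho R0 T0
              HD Hbeta Hrho Hrho_r Hrho_rr HC HCd Hfexp) as [Kt [h0 [Hh0 HG]]].
  destruct (density_estimates rho rho_r rho_rr Hrho Hrho_r Hrho_rr (Rabs R0) (Rabs T0))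
    as [Br [HBr [Hval _]]].
  destruct (coefficient_estimates Chat Chat_rho HC HCd Br) as [BC [HBC HCf]].
  destruct (coefficient_bounds kappa (Br + BC) (2 * m' + 1)) as [Kc [HKc Hcoef]].
  set (Kb := Rabs Kt + Kc + (2 + Rabs kappa + kappa ^ 2)).
  assert (HKb : 0 <= Kb) by (unfold Kb; pose proof (Rabs_pos Kt); pose proof (Rabs_pos kappa);
                             pose proof (pow2_ge_0 kappa); lra).
  exists (2 * D * (INR (length offdiag) * (14 * Kb ^ 2))), (Rmin h0 1).
  split; [apply Rmin_glb_lt; lra|].
  intros dr n l Hdr Hr Ht tau sd r t.
  assert (Hdr0 : 0 < dr < h0) by (pose proof (Rmin_l h0 1); lra).
  assert (Hdr1 : dr <= 1) by (pose proof (Rmin_r h0 1); lra).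
  destruct (Hbeta dr (proj1 Hdr)) as [Hb0 Hb1].
  destruct (Hval r t ltac:(pose proof (Rle_abs R0); unfold r; lra)
                     ltac:(pose proof (Rle_abs T0); unfold t, tau; lra)) as (Hg0 & Hg1 & Hg2).
  destruct (HCf (rho r t) 0 Hg0 ltac:(rewrite Rabs_R0; lra)) as (HCh & HChr & _).
  assert (HKt : Kt <= Kb) by (unfold Kb; pose proof (Rle_abs Kt); pose proof (pow2_ge_0 kappa);
                              pose proof (Rabs_pos kappa); lra).
  rewrite avgA_offdiag, Tsum_closed by (auto; lra).
  apply (expansion_assembly offdiag D dr (beta dr) eps _ Kb m'
    (fun p => (eta (beta dr) (v * dr / D) (fst p) + delta * nu (beta dr) (v * dr / D) (fst p))
              * nu (beta dr) (v * dr / D) (snd p))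
    (fun p => trailing_sum (beta dr) (v * dr / D) f sd k1 l n (fst p) (snd p))
    (fun p => trailing_sum (beta dr) (v * dr / D) f sd k1 l (n + Iw (fst p))%Z (fst p) (snd p))
    (fun p => wt0 (beta dr) delta (weight_class (fst p) (snd p)))
    (fun p => wt1 (beta dr) kappa delta (IwR (fst p)) (IwR (snd p)) (weight_class (fst p) (snd p)))
    (fun p => wt2 (beta dr) kappa delta (IwR (fst p)) (IwR (snd p)) (weight_class (fst p) (snd p)))
    (fun p => Chat (rho r t) * a_coef kappa (IwR (fst p)) (IwR (snd p)) (rho r t) (rho_r r t) ^ (2 * m' + 1))
    (fun p => order1_coef kappa (IwR (fst p)) (IwR (snd p)) 0 (rho r t) (rho_r r t) (rho_rr r t)
                (Chat (rho r t)) (Chat_rho (rho r t)) (2 * m' + 1))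
    (fun p => order1_coef kappa (IwR (fst p)) (IwR (snd p)) (IwR (fst p)) (rho r t) (rho_r r t)
                (rho_rr r t) (Chat (rho r t)) (Chat_rho (rho r t)) (2 * m' + 1)));
    try lra.
  - intros [w w0] Hp. apply weight_expansion; auto; lra.
  - intros [w w0] Hp. destruct (offdiag_digits _ Hp) as [Hw Hw0]. simpl in Hw, Hw0.
    pose proof (HG dr n l w w0 0%Z Hdr0 Hr Ht Hw Hw0 (or_introl eq_refl)) as H.
    rewrite Z.add_0_r in H. eapply Rle_trans; [exact H|].
    apply Rmult_le_compat_r; [apply pow_le; lra|lra].
  - intros [w w0] Hp. destruct (offdiag_digits _ Hp) as [Hw Hw0]. simpl in Hw, Hw0.
    pose proof (HG dr n l w w0 (Iw w) Hdr0 Hr Ht Hw Hw0 (or_intror eq_refl)) as H.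
    eapply Rle_trans; [exact H|].
    apply Rmult_le_compat_r; [apply pow_le; lra|lra].
  - intros [w w0] Hp. destruct (offdiag_digits _ Hp) as [Hw Hw0]. simpl in Hw, Hw0.
    pose proof (IwR_digit w Hw) as HIw. pose proof (IwR_digit w0 Hw0) as HI0.
    destruct (weight_bounds (beta dr) kappa delta (IwR w) (IwR w0) (weight_class w w0)
                (conj Hb0 Hb1) Hdelta HIw HI0) as (W0 & W1 & W2).
    assert (Hc : forall s, Rabs s <= 1 ->
                   Rabs (Chat (rho r t) * a_coef kappa (IwR w) (IwR w0) (rho r t) (rho_r r t)
                     ^ (2 * m' + 1)) <= Kc /\
                   Rabs (order1_coef kappa (IwR w) (IwR w0) s (rho r t) (rho_r r t) (rho_rr r t)
                     (Chat (rho r t)) (Chat_rho (rho r t)) (2 * m' + 1)) <= Kc).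
    { intros s Hs. destruct (Hcoef (IwR w) (IwR w0) s (rho r t) (rho_r r t) (rho_rr r t)
        (Chat (rho r t)) (Chat_rho (rho r t))) as (H1 & H2 & _); auto; lra. }
    destruct (Hc 0 ltac:(rewrite Rabs_R0; lra)) as [HA HB].
    destruct (Hc (IwR w) HIw) as [_ HB'].
    cbn [fst snd]. unfold Kb.
    pose proof (Rabs_pos Kt). pose proof (Rabs_pos kappa). pose proof (pow2_ge_0 kappa).
    repeat split; lra.
  - apply leading_order_cancels. lra.
  - apply next_order_identity. lra.
Qed.

End SiteAverage.

Lemma diagonal_vanishes (f : R -> R -> R) (Chat : R -> R) (p q : nat) :
  (0 < p)%nat -> (0 < q)%nat ->
  (forall M, 0 < M -> exists c e, 0 < e /\ forall x y, Rabs ((x + y) / 2) <= M ->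
     Rabs ((x - y) / 2) < e ->
     Rabs (f x y - Chat ((x + y) / 2) * ((x - y) / 2) ^ p) <= c * Rabs ((x - y) / 2) ^ q) ->
  forall x, f x x = 0.
Proof.
  intros Hp Hq Hfexp x.
  destruct (Hfexp (Rabs x + 1)) as [c [e [He H]]]; [pose proof (Rabs_pos x); lra|].
  specialize (H x x).
  replace ((x + x) / 2) with x in H by field. replace ((x - x) / 2) with 0 in H by field.
  rewrite Rabs_R0, !pow_i, Rmult_0_r, Rmult_0_r, Rminus_0_r in H by lia.
  apply Rabs_eq_0. apply Rle_antisym; [apply H; lra|apply Rabs_pos].
Qed.

Lemma sign_bound (s : R) : s = 1 \/ s = -1 -> Rabs s <= 1.
Proof. intros [-> | ->]; unfold Rabs; destruct Rcase_abs; lra. Qed.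

Theorem mainTheorem3
  (D v : R) (HD : 0 < D)
  (b : R) (Hb : 0 <= b)
  (beta : R -> R)
  (Hbeta : forall dr, 0 < dr -> 0 < beta dr < 1)
  (HbetaO : exists cb h1, 0 < cb /\ 0 < h1 /\
              forall dr, 0 < dr < h1 -> beta dr <= cb * Rpower dr b)
  (k : nat) (Hk : (1 <= k)%nat)
  (rho rho_r rho_rr : R -> R -> R)
  (Hrho : smooth2 rho)
  (Hrho_r : forall r t, derivable_pt_lim (fun s => rho s t) r (rho_r r t))
  (Hrho_rr : forall r t, derivable_pt_lim (fun s => rho_r s t) r (rho_rr r t))
  (m' : nat)
  (f : R -> R -> R) (Hf : smooth2 f)
  (Hfsym : (forall x y, f x y = f y x) \/ (forall x y, f x y = - f y x))
  (Chat Chat_rho : R -> R)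
  (HC : smooth1 Chat)
  (HCd : forall y, derivable_pt_lim Chat y (Chat_rho y))
  (HCnz : exists y, Chat y <> 0)
  (HCbd : exists B, forall y, Rabs (Chat y) <= B)
  (Hfexp : forall M, 0 < M -> exists c e, 0 < e /\
      forall x y, Rabs ((x + y) / 2) <= M -> Rabs ((x - y) / 2) < e ->
        Rabs (f x y - Chat ((x + y) / 2) * ((x - y) / 2) ^ (2 * m' + 1))
          <= c * Rabs ((x - y) / 2) ^ (2 * m' + 3))
  (eps delta : R)
  (Heps : eps = 1 \/ eps = -1) (Hdelta : delta = 1 \/ delta = -1)
  (Hed : eps = -1 \/ delta = 1) :
  forall R0 T0 : R, exists Cst h0, 0 < h0 /\
    forall (dr : R) (n l : Z), 0 < dr < h0 ->
      Rabs (IZR n * dr) <= R0 ->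
      Rabs (IZR l * tau_of D (beta dr) dr) <= T0 ->
      let tau := tau_of D (beta dr) dr in
      let sd := fun (n' l' : Z) => rho (IZR n' * dr) (IZR l' * tau) in
      let r := IZR n * dr in
      let t := IZR l * tau in
      Rabs (avgA D v (beta dr) dr k (2 * m' + 1) eps delta f sd n l
            - dr ^ (2 * m') *
              Tsum D v (beta dr) (v * dr / D) eps delta m'
                   (rho r t) (rho_r r t) (rho_rr r t)
                   (Chat (rho r t)) (Chat_rho (rho r t)))
        <= Cst * dr ^ (2 * m' + 1).
Proof.
  intros R0 T0.
  destruct k as [|k1]; [lia|].
  assert (Hfexp' : forall M, 0 < M -> exists c e, 0 < e /\ forall x y,
     Rabs ((x + y) / 2) <= M -> Rabs ((x - y) / 2) < e ->
     Rabs (f x y - Chat ((x + y) / 2) * ((x - y) / 2) ^ (2 * m' + 1))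
       <= c * Rabs ((x - y) / 2) ^ (2 * m' + 1 + 2)).
  { replace (2 * m' + 1 + 2)%nat with (2 * m' + 3)%nat by lia. exact Hfexp. }
  assert (Hdiag : forall x, f x x = 0)
    by (apply (diagonal_vanishes f Chat (2 * m' + 1) (2 * m' + 3)); auto; lia).
  exact (site_average_expansion D v beta k1 rho rho_r rho_rr m' f Chat Chat_rho eps delta HD Hbeta
           Hrho Hrho_r Hrho_rr HC HCd Hfexp' Hdiag (sign_bound eps Heps) (sign_bound delta Hdelta)
           R0 T0).
Qed.
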